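(* Let $f$ be an infinitely differentiable real-valued function on $\mathbb{R}^2$ supported in a compact set contained in the open half-plane $\{(x,y):y>0\}$. Then there exist real polynomials (1) $A_{2k,2i}(t)=\sum_{j=1}^{k+i}A_j(2k,2i)\,t^{2j-1}$ on $[0,1]$, for integers $k\ge1$ and $0\le i\le k$, and (2) $B_{2k-1,2i-1}(t)=\sum_{j=1}^{k+i-1}B_j(2k-1,2i-1)\,t^{2j-1}$ on $[0,1]$, for integers $k\ge1$ and $1\le i\le k$, such that for all $p\in\mathbb{R}$, $r>0$ and $k\ge1$, $$a_{2k}(p,r)=2\,Mf(p,r)+\int_0^r\sum_{i=0}^{k} r^{2i-1}A_{2k,2i}(u/r)\,\frac{\partial^{2i}}{\partial p^{2i}}Mf(p,u)\,du$$ and $$b_{2k-1}(p,r)=\int_0^r\sum_{i=1}^{k} r^{2(i-1)}B_{2k-1,2i-1}(u/r)\,\frac{\partial^{2i-1}}{\partial p^{2i-1}}Mf(p,u)\,du.$$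
   Context: Use Cartesian coordinates on $\mathbb{R}^2$ in which the line $L$ is the $x$-axis. For $p\in\mathbb{R}$, $r\ge0$ and $\varphi\in[-\pi,\pi]$ write $f(p,r,\varphi)=f(p+r\sin\varphi,\,r\cos\varphi)$ for the restriction of $f$ to the circle of radius $r$ centered at $(p,0)$, with $\varphi$ the angular coordinate measured from the direction perpendicular to $L$. Define $Mf(p,r)=\frac{1}{2\pi}\int_{-\pi}^{\pi}f(p,r,\varphi)\,d\varphi$ and the Fourier coefficients $a_k(p,r)=\frac1\pi\int_{-\pi}^{\pi}f(p,r,\varphi)\cos(k\varphi)\,d\varphi$, $b_k(p,r)=\frac1\pi\int_{-\pi}^{\pi}f(p,r,\varphi)\sin(k\varphi)\,d\varphi$ for $k\ge1$. For $i=0$ the $0$-th derivative is $Mf$ itself. *)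

From Stdlib Require Import Reals List.
From Coquelicot Require Import Coquelicot.
Open Scope R_scope.

(* Iterated partial derivatives of g : R -> R -> R.
   [true] = derivative in the first variable x, [false] = in the second y.
   The head of the list is the last derivative applied. *)
Fixpoint pdiff (l : list bool) (g : R -> R -> R) : R -> R -> R :=
  match l with
  | nil => g
  | b :: l' =>
      let h := pdiff l' g in
      if b then (fun x y => Derive (fun t => h t y) x)
      else (fun x y => Derive (fun t => h x t) y)
  end.

Definition smooth2 (g : R -> R -> R) : Prop :=
  forall (l : list bool) (x y : R),
    ex_derive (fun t => pdiff l g t y) x /\
    ex_derive (fun t => pdiff l g x t) y /\
    continuous (fun z : R * R => pdiff l g (fst z) (snd z)) (x, y).

(* The support of g is contained in a compact subset of the open upper
   half-plane {y > 0}: equivalently, in a rectangle [a,b] x [c,d] with c > 0. *)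
Definition compact_supp_upper (g : R -> R -> R) : Prop :=
  exists a b c d : R, 0 < c /\
    forall x y, ~ (a <= x <= b /\ c <= y <= d) -> g x y = 0.

Definition fcirc (f : R -> R -> R) (p r phi : R) : R :=
  f (p + r * sin phi) (r * cos phi).

Definition Mf (f : R -> R -> R) (p r : R) : R :=
  / (2 * PI) * RInt (fun phi => fcirc f p r phi) (- PI) PI.

Definition a_coef (f : R -> R -> R) (k : nat) (p r : R) : R :=
  / PI * RInt (fun phi => fcirc f p r phi * cos (INR k * phi)) (- PI) PI.

Definition b_coef (f : R -> R -> R) (k : nat) (p r : R) : R :=
  / PI * RInt (fun phi => fcirc f p r phi * sin (INR k * phi)) (- PI) PI.

Definition dpMf (f : R -> R -> R) (i : nat) (p u : R) : R :=
  Derive_n (fun q => Mf f q u) i p.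

Definition oddpoly (c : nat -> R) (n : nat) (t : R) : R :=
  sum_n_m (fun j => c j * t ^ (2 * j - 1)) 1 n.

(* Writing
   f_x = sin phi * d_r f + (cos phi / r) * d_phi f and integrating the angular part by parts turns
   the Fourier coefficients of f_x into r-derivatives of those of f:
     r a_{2k+2}' + (2k+2) a_{2k+2} = r a_{2k}' - 2k a_{2k} - 2 r b_{2k+1}[f_x],
     r b_{2k+3}' + (2k+3) b_{2k+3} = r b_{2k+1}' - (2k+1) b_{2k+1} + 2 r a_{2k+2}[f_x],
   with a_0 = 2 Mf and r b_1' + b_1 = 2 r M[f_x].  Since d_p Mf = M[f_x], induction on k reduces the
   claim to choosing the coefficients so that the proposed right-hand sides, combinations of
   r^(2i) int_0^r (u/r)^(2j-1) d_p^m Mf(p,u) du, satisfy the same equations; this is a linear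
   recursion on the coefficients, solvable except for the top index, which is fixed by the
   boundary terms.  Both sides vanish for r below the distance from supp f to L, and
   r Y' + n Y = 0 forces (r^n Y)' = 0, so they agree for all r > 0. *)

From Stdlib Require Import Reals ZArith Lra Lia List.
From Coquelicot Require Import Coquelicot.
Open Scope R_scope.

(* Coquelicot states its algebraic rules with [plus], [scal], ... of an abstract structure, which do
   not unify with [Rplus], [Rmult]; these are their forms on [R]. *)

Lemma is_derive_eq_val (f : R -> R) (x l l' : R) :
  is_derive f x l' -> l' = l -> is_derive f x l.
Proof. intros H ->; exact H. Qed.

Lemma is_derive_const_R (c x : R) : is_derive (fun _ => c) x 0.
Proof. apply (is_derive_const c). Qed.

Lemma is_derive_id_R (x : R) : is_derive (fun y : R => y) x 1.
Proof. apply (is_derive_id x). Qed.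

Lemma is_derive_plus_R (f h : R -> R) (x a b : R) :
  is_derive f x a -> is_derive h x b -> is_derive (fun y => f y + h y) x (a + b).
Proof. intros; apply (is_derive_plus f h); auto. Qed.

Lemma is_derive_minus_R (f h : R -> R) (x a b : R) :
  is_derive f x a -> is_derive h x b -> is_derive (fun y => f y - h y) x (a - b).
Proof. intros; apply (is_derive_minus f h); auto. Qed.

Lemma is_derive_comp_R (f h : R -> R) (x a b : R) :
  is_derive f (h x) a -> is_derive h x b -> is_derive (fun y => f (h y)) x (b * a).
Proof. intros; apply (is_derive_comp f h); auto. Qed.

Lemma is_derive_pow_id (n : nat) (x : R) :
  is_derive (fun y => y ^ n) x (INR n * 1 * x ^ Init.Nat.pred n).
Proof. apply (is_derive_pow (fun y => y)), is_derive_id_R. Qed.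

Lemma is_derive_inv_pow (n : nat) (x : R) : x <> 0 ->
  is_derive (fun y => / y ^ n) x (- (INR n * 1 * x ^ Init.Nat.pred n) / (x ^ n) ^ 2).
Proof. intros Hx. apply is_derive_inv; [apply is_derive_pow_id | apply pow_nonzero; auto]. Qed.

Lemma INR_pow_pred (n : nat) (r : R) : r <> 0 -> INR n * r ^ Init.Nat.pred n = INR n * r ^ n / r.
Proof. intros Hr. destruct n; simpl; field; auto. Qed.

Lemma INR_double n : INR (2 * n) = 2 * INR n.
Proof. rewrite mult_INR; reflexivity. Qed.

Section Continuity.
Context {U : UniformSpace}.

Lemma continuous_const_R (c : R) (z : U) : continuous (fun _ => c) z.
Proof. apply continuous_const. Qed.

Lemma continuous_mult_R (f h : U -> R) z :
  continuous f z -> continuous h z -> continuous (fun z => f z * h z) z.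
Proof. intros; apply (continuous_mult f h); auto. Qed.

Lemma continuous_plus_R (f h : U -> R) z :
  continuous f z -> continuous h z -> continuous (fun z => f z + h z) z.
Proof. intros; apply (continuous_plus f h); auto. Qed.

Lemma continuous_minus_R (f h : U -> R) z :
  continuous f z -> continuous h z -> continuous (fun z => f z - h z) z.
Proof.
  intros Hf Hh; apply continuous_plus_R; [exact Hf | apply (continuous_opp h); auto].
Qed.

Lemma continuous_sin_fun (f : U -> R) z : continuous f z -> continuous (fun z => sin (f z)) z.
Proof. intros; apply (continuous_comp f sin); auto; apply continuous_sin. Qed.

Lemma continuous_cos_fun (f : U -> R) z : continuous f z -> continuous (fun z => cos (f z)) z.
Proof. intros; apply (continuous_comp f cos); auto; apply continuous_cos. Qed.

End Continuity.

Lemma continuous_fst_R2 (z : R * R) : continuous (fun z : R * R => fst z) z.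
Proof. destruct z; apply continuous_fst. Qed.

Lemma continuous_snd_R2 (z : R * R) : continuous (fun z : R * R => snd z) z.
Proof. destruct z; apply continuous_snd. Qed.

Definition continuous_R (f : R -> R) := forall x, continuous f x.

Lemma continuous_R_const c : continuous_R (fun _ => c).
Proof. intros x; apply continuous_const_R. Qed.

Lemma continuous_R_mult f h : continuous_R f -> continuous_R h -> continuous_R (fun x => f x * h x).
Proof. intros Hf Hh x; apply continuous_mult_R; auto. Qed.

Lemma continuous_R_plus f h : continuous_R f -> continuous_R h -> continuous_R (fun x => f x + h x).
Proof. intros Hf Hh x; apply continuous_plus_R; auto. Qed.

Lemma continuous_R_sin : continuous_R sin.
Proof. intros x; apply continuous_sin. Qed.

Lemma continuous_R_cos : continuous_R cos.
Proof. intros x; apply continuous_cos. Qed.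

Lemma continuous_R_pow n : continuous_R (fun u => u ^ n).
Proof.
  intros x. apply (ex_derive_continuous (K := R_AbsRing) (V := R_NormedModule)).
  eexists. apply is_derive_pow_id.
Qed.

Lemma continuous_R_snd (w : R -> R) (z : R * R) :
  continuous_R w -> continuous (fun z : R * R => w (snd z)) z.
Proof. intros Hw. apply (continuous_comp (fun z : R * R => snd z) w), Hw. apply continuous_snd_R2. Qed.

Lemma ex_RInt_continuous_R (f : R -> R) a b : continuous_R f -> ex_RInt f a b.
Proof. intros H; apply (ex_RInt_continuous (V := R_CompleteNormedModule)); intros; apply H. Qed.

Lemma RInt_ext_R (f h : R -> R) a b : (forall x, f x = h x) -> RInt f a b = RInt h a b.
Proof. intros H; apply (RInt_ext (V := R_CompleteNormedModule)); intros; auto. Qed.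

Lemma RInt_const_R (c a b : R) : RInt (fun _ => c) a b = (b - a) * c.
Proof. rewrite RInt_const. reflexivity. Qed.

Lemma RInt_scal_R (f : R -> R) a b c : continuous_R f -> RInt (fun x => c * f x) a b = c * RInt f a b.
Proof.
  intros Hf. apply (is_RInt_unique (V := R_CompleteNormedModule)).
  apply (is_RInt_scal (V := R_NormedModule) f).
  apply (RInt_correct (V := R_CompleteNormedModule)), ex_RInt_continuous_R; auto.
Qed.

Lemma RInt_lincomb (f h : R -> R) a b c1 c2 : continuous_R f -> continuous_R h ->
  RInt (fun x => c1 * f x + c2 * h x) a b = c1 * RInt f a b + c2 * RInt h a b.
Proof.
  intros Hf Hh. apply (is_RInt_unique (V := R_CompleteNormedModule)).
  apply (is_RInt_plus (V := R_NormedModule) (fun x => c1 * f x) (fun x => c2 * h x));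
    apply (is_RInt_scal (V := R_NormedModule));
    apply (RInt_correct (V := R_CompleteNormedModule)), ex_RInt_continuous_R; auto.
Qed.

Lemma sum_n_m_plus_R (f h : nat -> R) m n :
  sum_n_m (fun k => f k + h k) m n = sum_n_m f m n + sum_n_m h m n.
Proof. apply (sum_n_m_plus (G := R_AbelianMonoid)). Qed.

Lemma sum_n_m_mult_l_R (f : nat -> R) c m n :
  sum_n_m (fun k => c * f k) m n = c * sum_n_m f m n.
Proof. apply (sum_n_m_mult_l (K := R_Ring)). Qed.

Lemma sum_n_m_mult_r_R (f : nat -> R) c m n :
  sum_n_m (fun k => f k * c) m n = sum_n_m f m n * c.
Proof. apply (sum_n_m_mult_r (K := R_Ring)). Qed.

Lemma sum_n_m_ext_R (f h : nat -> R) m n :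
  (forall k, (m <= k <= n)%nat -> f k = h k) -> sum_n_m f m n = sum_n_m h m n.
Proof. apply (sum_n_m_ext_loc (G := R_AbelianMonoid)). Qed.

Lemma sum_n_m_eq0 (f : nat -> R) m n :
  (forall k, (m <= k <= n)%nat -> f k = 0) -> sum_n_m f m n = 0.
Proof.
  intros H. rewrite (sum_n_m_ext_R f (fun _ => zero)); auto.
  apply (sum_n_m_const_zero (G := R_AbelianMonoid)).
Qed.

Lemma sum_n_m_first (f : nat -> R) m n : (m <= n)%nat -> sum_n_m f m n = f m + sum_n_m f (S m) n.
Proof. intros; apply (sum_Sn_m (G := R_AbelianMonoid)); auto. Qed.

Lemma sum_n_m_last (f : nat -> R) m n : (m <= S n)%nat -> sum_n_m f m (S n) = sum_n_m f m n + f (S n).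
Proof. intros; apply (sum_n_Sm (G := R_AbelianMonoid)); auto. Qed.

Lemma sum_n_n_R (f : nat -> R) n : sum_n_m f n n = f n.
Proof. apply (sum_n_n (G := R_AbelianMonoid)). Qed.

Lemma sum_n_m_empty (f : nat -> R) m n : (n < m)%nat -> sum_n_m f m n = 0.
Proof. intros; apply (sum_n_m_zero (G := R_AbelianMonoid)); auto. Qed.

Lemma sum_n_m_shift (f : nat -> R) m n : sum_n_m (fun k => f (S k)) m n = sum_n_m f (S m) (S n).
Proof. apply (sum_n_m_S (G := R_AbelianMonoid)). Qed.

Lemma sum_n_m_extend (f : nat -> R) m n n' : (n <= n')%nat ->
  (forall k, (n < k <= n')%nat -> f k = 0) -> sum_n_m f m n = sum_n_m f m n'.
Proof.
  intros Hn Hz. induction n' as [|n' IH].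
  - assert (n = 0%nat) by lia. subst; auto.
  - destruct (Nat.eq_dec n (S n')) as [->|Hne]; auto.
    destruct (le_lt_dec m (S n')) as [Hm|Hm].
    + rewrite sum_n_m_last, Hz, Rplus_0_r by lia. apply IH; [lia|].
      intros; apply Hz; lia.
    + rewrite !sum_n_m_empty by lia. auto.
Qed.

Lemma sum_n_m_indicator (d : R) i0 N : (i0 <= N)%nat ->
  (sum_n_m (fun i => if (i =? i0)%nat then d else 0) 0 N : R) = d.
Proof.
  induction N as [|N IH]; intros HN.
  - replace i0 with 0%nat by lia. apply sum_n_n_R.
  - rewrite sum_n_m_last by lia.
    destruct (Nat.eq_dec i0 (S N)) as [->|Hne].
    + rewrite Nat.eqb_refl, sum_n_m_eq0; [ring|].
      intros i Hi. rewrite (proj2 (Nat.eqb_neq i (S N))) by lia. reflexivity.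
    + rewrite IH, (proj2 (Nat.eqb_neq (S N) i0)) by lia. ring.
Qed.

Lemma sum_n_m_plus_indicator (u v : nat -> R) d i0 N : (i0 <= N)%nat ->
  (forall i, (i <= N)%nat -> u i = v i + (if (i =? i0)%nat then d else 0)) ->
  (sum_n_m u 0 N : R) = sum_n_m v 0 N + d.
Proof.
  intros Hi0 H. rewrite (sum_n_m_ext_R _ _ _ _ (fun i Hi => H i (proj2 Hi))).
  rewrite sum_n_m_plus_R, sum_n_m_indicator by auto. reflexivity.
Qed.

Lemma sum_n_m_additive (Rel : (R -> R) -> R -> Prop) (f : nat -> R -> R) (v : nat -> R) m n :
  (forall g1 g2 a, (forall x, g1 x = g2 x) -> Rel g1 a -> Rel g2 a) ->
  Rel (fun _ => 0) 0 ->
  (forall g1 g2 a1 a2, Rel g1 a1 -> Rel g2 a2 -> Rel (fun x => g1 x + g2 x) (a1 + a2)) ->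
  (forall k, (m <= k <= n)%nat -> Rel (f k) (v k)) ->
  Rel (fun x => sum_n_m (fun k => f k x) m n) (sum_n_m v m n).
Proof.
  intros Hext H0 Hplus Hf.
  assert (Hempty : forall n, (n < m)%nat -> Rel (fun x => sum_n_m (fun k => f k x) m n) (sum_n_m v m n)).
  { intros n' Hn'. rewrite sum_n_m_empty by lia.
    apply (Hext (fun _ => 0)); auto. intros; rewrite sum_n_m_empty; auto. }
  induction n as [|n IH].
  - destruct m; [|apply Hempty; lia].
    rewrite sum_n_n_R. apply (Hext (f 0%nat)); [intros; rewrite sum_n_n_R; auto | apply Hf; lia].
  - destruct (le_lt_dec m (S n)) as [Hm|Hm]; [|apply Hempty; lia].
    rewrite sum_n_m_last by lia.
    apply (Hext (fun x => sum_n_m (fun k => f k x) m n + f (S n) x)).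
    { intros; rewrite sum_n_m_last; auto. }
    apply Hplus; [|apply Hf; lia].
    destruct (Nat.eq_dec m (S n)) as [->|Hne]; [apply Hempty; lia|].
    apply IH; intros; apply Hf; lia.
Qed.

Lemma is_derive_sum_n_m (f df : nat -> R -> R) m n x :
  (forall k, (m <= k <= n)%nat -> is_derive (f k) x (df k x)) ->
  is_derive (fun y => sum_n_m (fun k => f k y) m n) x (sum_n_m (fun k => df k x) m n).
Proof.
  apply (sum_n_m_additive (fun g a => is_derive g x a)).
  - intros g1 g2 a E H. apply (is_derive_ext g1); auto.
  - apply is_derive_const_R.
  - intros; apply is_derive_plus_R; auto.
Qed.

Lemma continuous_R_sum_n_m (f : nat -> R -> R) m n :
  (forall k, continuous_R (f k)) -> continuous_R (fun x => sum_n_m (fun k => f k x) m n).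
Proof.
  intros H x.
  apply (sum_n_m_additive (fun g _ => continuous g x) f (fun _ => 0)).
  - intros g1 g2 a E Hg. apply (continuous_ext g1); auto.
  - apply continuous_const_R.
  - intros; apply continuous_plus_R; auto.
  - intros; apply H.
Qed.

Lemma RInt_sum_n_m (f : nat -> R -> R) a b m n : (forall k, continuous_R (f k)) ->
  RInt (fun x => sum_n_m (fun k => f k x) m n) a b = sum_n_m (fun k => RInt (f k) a b) m n.
Proof.
  intros H. apply (is_RInt_unique (V := R_CompleteNormedModule)).
  apply (sum_n_m_additive (fun g v => is_RInt g a b v)).
  - intros g1 g2 v E Hg. apply (is_RInt_ext (V := R_NormedModule) g1); auto.
  - pose proof (is_RInt_const (V := R_NormedModule) a b 0) as Hc.
    unfold scal, mult in Hc; simpl in Hc. rewrite Rmult_0_r in Hc. exact Hc.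
  - intros; apply (is_RInt_plus (V := R_NormedModule)); auto.
  - intros k _. apply (RInt_correct (V := R_CompleteNormedModule)), ex_RInt_continuous_R, H.
Qed.

Lemma is_derive_RInt_param_R (F dF : R -> R -> R) a b x :
  (forall u t, is_derive (fun s => F s t) u (dF u t)) ->
  (forall z : R * R, continuous (fun z : R * R => dF (fst z) (snd z)) z) ->
  (forall u, continuous_R (F u)) ->
  is_derive (fun s => RInt (F s) a b) x (RInt (dF x) a b).
Proof.
  intros Hd Hc HF.
  apply is_derive_eq_val with (RInt (fun t => Derive (fun u => F u t) x) a b).
  - apply (is_derive_RInt_param F a b x).
    + apply filter_forall. intros y t _. exists (dF y t); auto.
    + intros t _. apply continuity_2d_pt_ext with (fun u v => dF u v).
      * intros; symmetry; apply is_derive_unique; auto.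
      * apply continuity_2d_pt_filterlim, (Hc (x, t)).
    + apply filter_forall. intros y. apply ex_RInt_continuous_R; auto.
  - apply RInt_ext_R. intros t. apply is_derive_unique; auto.
Qed.

Lemma RInt_by_parts_periodic (F dF v dv : R -> R) a b :
  (forall t, is_derive F t (dF t)) -> (forall t, is_derive v t (dv t)) ->
  continuous_R dF -> continuous_R dv -> F a * v a = F b * v b ->
  RInt (fun t => dF t * v t) a b = - RInt (fun t => F t * dv t) a b.
Proof.
  intros HF Hv CdF Cdv Eper.
  assert (CF : continuous_R F)
    by (intros t; apply (ex_derive_continuous (K := R_AbsRing) (V := R_NormedModule)); eexists; apply HF).
  assert (Cv : continuous_R v)
    by (intros t; apply (ex_derive_continuous (K := R_AbsRing) (V := R_NormedModule)); eexists; apply Hv).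
  assert (E0 : RInt (fun t => 1 * (dF t * v t) + 1 * (F t * dv t)) a b = 0).
  { apply (is_RInt_unique (V := R_CompleteNormedModule)).
    apply (is_RInt_ext (V := R_NormedModule)) with (fun t => dF t * v t + F t * dv t).
    { intros; rewrite !Rmult_1_l; reflexivity. }
    replace 0 with (minus (F b * v b) (F a * v a))
      by (rewrite Eper; unfold minus, plus, opp; simpl; ring).
    apply (is_RInt_derive (V := R_CompleteNormedModule) (fun t => F t * v t)).
    - intros x _. apply (Derive.is_derive_mult F v); auto.
    - intros x _. apply continuous_plus_R; apply continuous_mult_R; auto. }
  rewrite RInt_lincomb in E0 by (apply continuous_R_mult; auto).
  lra.
Qed.

(* [s ^ n * (X - Y)] has zero derivative on [(0, +oo)] and vanishes near [0]. *)
Lemma euler_ode_unique (X Y dX dY : R -> R) (n : nat) c : 0 < c ->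
  (forall r, 0 < r -> is_derive X r (dX r)) ->
  (forall r, 0 < r -> is_derive Y r (dY r)) ->
  (forall r, 0 < r < c -> X r = Y r) ->
  (forall r, 0 < r -> r * dX r + INR n * X r = r * dY r + INR n * Y r) ->
  forall r, 0 < r -> X r = Y r.
Proof.
  intros Hc HX HY H0 HE r Hr.
  destruct (Rlt_dec r c) as [Hrc|Hrc]; [apply H0; lra|].
  set (h := fun s => s ^ n * (X s - Y s)).
  assert (Dh : forall s, 0 < s -> is_derive h s 0).
  { intros s Hs. unfold h.
    apply is_derive_eq_val with (INR n * 1 * s ^ Init.Nat.pred n * (X s - Y s) + s ^ n * (dX s - dY s)).
    - apply (Derive.is_derive_mult (fun s => s ^ n) (fun s => X s - Y s));
        [apply is_derive_pow_id | apply is_derive_minus_R; auto].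
    - rewrite Rmult_1_r, INR_pow_pred by lra.
      replace (INR n * s ^ n / s * (X s - Y s) + s ^ n * (dX s - dY s))
        with (s ^ n / s * (s * dX s + INR n * X s - (s * dY s + INR n * Y s))) by (field; lra).
      rewrite HE by auto. ring. }
  destruct (MVT_gen h (c / 2) r (fun _ => 0)) as [xi [_ Exi]].
  - intros x Hx. rewrite Rmin_left in Hx by lra. apply Dh. lra.
  - intros x Hx. rewrite Rmin_left in Hx by lra.
    apply continuity_pt_filterlim, (ex_derive_continuous (K := R_AbsRing) (V := R_NormedModule) h).
    exists 0. apply Dh. lra.
  - assert (Hh0 : h (c / 2) = 0) by (unfold h; rewrite H0 by lra; ring).
    assert (Hhr : h r = 0) by lra.
    unfold h in Hhr. apply Rmult_integral in Hhr as [Hz|Hz]; [|lra].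
    exfalso; revert Hz; apply pow_nonzero; lra.
Qed.

Lemma is_derive_unique_pos (F G : R -> R) r a b : (forall s, 0 < s -> F s = G s) -> 0 < r ->
  is_derive F r a -> is_derive G r b -> a = b.
Proof.
  intros E Hr HF HG.
  assert (HG' : is_derive G r a).
  { apply is_derive_ext_loc with F; auto.
    exists (mkposreal _ Hr). intros s Hs. apply E.
    unfold ball in Hs; simpl in Hs. unfold AbsRing_ball, abs, minus, plus, opp in Hs; simpl in Hs.
    apply Rabs_def2 in Hs. lra. }
  rewrite <- (is_derive_unique _ _ _ HG'). apply is_derive_unique; auto.
Qed.

Definition radial_moment (h : R -> R) (n : nat) (r : R) : R := RInt (fun u => (u / r) ^ n * h u) 0 r.

Lemma radial_moment_ext h1 h2 n r : (forall u, h1 u = h2 u) -> radial_moment h1 n r = radial_moment h2 n r.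
Proof. intros E. apply RInt_ext_R. intros; rewrite E; auto. Qed.

Lemma is_derive_radial_moment h n r : continuous_R h -> r <> 0 ->
  is_derive (radial_moment h n) r (h r - INR n / r * radial_moment h n r).
Proof.
  intros Hh Hr.
  set (J := fun s => RInt (fun u => u ^ n * h u) 0 s).
  assert (Ch : continuous_R (fun u => u ^ n * h u))
    by (apply continuous_R_mult; auto; apply continuous_R_pow).
  assert (EJ : forall s, s <> 0 -> radial_moment h n s = / s ^ n * J s).
  { intros s Hs. unfold radial_moment, J. rewrite <- RInt_scal_R by auto.
    apply RInt_ext_R. intros u. unfold Rdiv. rewrite Rpow_mult_distr, pow_inv. ring. }
  assert (DJ : is_derive J r (r ^ n * h r)).
  { apply (is_derive_RInt (V := R_CompleteNormedModule) (fun u => u ^ n * h u) J 0); [|apply Ch].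
    apply filter_forall. intros b. apply (RInt_correct (V := R_CompleteNormedModule)).
    apply ex_RInt_continuous_R, Ch. }
  apply is_derive_ext_loc with (fun s => / s ^ n * J s).
  - assert (Hpos : 0 < Rabs r) by (apply Rabs_pos_lt; auto).
    exists (mkposreal _ Hpos). intros s Hs. rewrite EJ; auto.
    intros ->. unfold ball in Hs; simpl in Hs. unfold AbsRing_ball, abs, minus, plus, opp in Hs; simpl in Hs.
    rewrite Rplus_0_l, Rabs_Ropp in Hs. lra.
  - eapply is_derive_eq_val;
      [apply (Derive.is_derive_mult (fun s => / s ^ n) J); [apply is_derive_inv_pow; auto | exact DJ]|].
    rewrite EJ, Rmult_1_r, INR_pow_pred by auto.
    field. split; auto. apply pow_nonzero; auto.
Qed.

Lemma radial_moment_vanish h n r c : (forall u, Rabs u < c -> h u = 0) -> 0 < r < c ->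
  radial_moment h n r = 0.
Proof.
  intros Hh Hr. unfold radial_moment. rewrite (RInt_ext (V := R_CompleteNormedModule) _ (fun _ => 0)).
  - rewrite RInt_const_R. apply Rmult_0_r.
  - intros x Hx. rewrite Rmin_left in Hx by lra. rewrite Rmax_right in Hx by lra.
    rewrite Hh by (rewrite Rabs_right; lra). apply Rmult_0_r.
Qed.

Definition dx (g : R -> R -> R) : R -> R -> R := fun x y => Derive (fun t => g t y) x.
Definition dy (g : R -> R -> R) : R -> R -> R := fun x y => Derive (fun t => g x t) y.

Lemma pdiff_app l1 l2 g : pdiff (l1 ++ l2) g = pdiff l1 (pdiff l2 g).
Proof. induction l1 as [|b l1 IH]; simpl; auto. rewrite IH. reflexivity. Qed.

Lemma smooth2_dx g : smooth2 g -> smooth2 (dx g).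
Proof. intros H l x y. specialize (H (l ++ true :: nil) x y). rewrite pdiff_app in H. exact H. Qed.

Lemma smooth2_dy g : smooth2 g -> smooth2 (dy g).
Proof. intros H l x y. specialize (H (l ++ false :: nil) x y). rewrite pdiff_app in H. exact H. Qed.

Section MeanDerivatives.
Variable g : R -> R -> R.
Hypothesis Hg : smooth2 g.

Lemma smooth2_continuous (z : R * R) : continuous (fun z : R * R => g (fst z) (snd z)) z.
Proof. destruct z as [x y]. exact (proj2 (proj2 (Hg nil x y))). Qed.

Lemma smooth2_ex_derive_x x y : ex_derive (fun t => g t y) x.
Proof. exact (proj1 (Hg nil x y)). Qed.

Lemma smooth2_continuous_comp {U : UniformSpace} (X Y : U -> R) z :
  continuous X z -> continuous Y z -> continuous (fun z => g (X z) (Y z)) z.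
Proof. intros HX HY. apply (continuous_comp_2 X Y g z HX HY (smooth2_continuous (X z, Y z))). Qed.

End MeanDerivatives.

Lemma smooth2_ex_diff_n n : forall g, smooth2 g -> forall x y, ex_diff_n g n x y.
Proof.
  assert (C : forall g x y, smooth2 g -> continuity_2d_pt g x y)
    by (intros g x y H; apply continuity_2d_pt_filterlim, (smooth2_continuous g H (x, y))).
  induction n as [|n IH]; intros g H x y; simpl.
  - split; [apply C; auto | exact I].
  - repeat split.
    + apply C; auto.
    + apply smooth2_ex_derive_x; auto.
    + exact (proj1 (proj2 (H nil x y))).
    + apply (IH (dx g)), smooth2_dx; auto.
    + apply (IH (dy g)), smooth2_dy; auto.
Qed.

(* First-order Taylor-Lagrange: the remainder is [O(|(u,v) - (x,y)|^2)]. *)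
Lemma smooth2_differentiable g x y : smooth2 g ->
  differentiable_pt_lim g x y (dx g x y) (dy g x y).
Proof.
  intros H.
  destruct (Taylor_Lagrange_2d g 1 x y) as [D [d0 Hd0]].
  { exists (mkposreal 1 Rlt_0_1). intros. apply smooth2_ex_diff_n; auto. }
  intros eps.
  assert (HD1 : 0 < Rabs D + 1) by (pose proof (Rabs_pos D); lra).
  assert (Hp : 0 < Rmin d0 (eps / (Rabs D + 1)))
    by (apply Rmin_pos; [apply cond_pos | apply Rdiv_lt_0_compat; [apply cond_pos | lra]]).
  exists (mkposreal _ Hp). intros u v Hu Hv. simpl in Hu, Hv.
  specialize (Hd0 u v (Rlt_le_trans _ _ _ Hu (Rmin_l _ _)) (Rlt_le_trans _ _ _ Hv (Rmin_l _ _))).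
  replace (DL_pol 1 g x y (u - x) (v - y))
    with (g x y + (dx g x y * (u - x) + dy g x y * (v - y))) in Hd0
    by (unfold DL_pol, differential, partial_derive, dx, dy, Binomial.C; simpl; field).
  set (M := Rmax (Rabs (u - x)) (Rabs (v - y))) in *.
  assert (HM0 : 0 <= M) by (unfold M; eapply Rle_trans; [apply Rabs_pos | apply Rmax_l]).
  assert (HM : M <= eps / (Rabs D + 1))
    by (unfold M; apply Rmax_lub; left; eapply Rlt_le_trans; try apply Rmin_r; eauto).
  assert (HDM : Rabs D * M <= eps).
  { apply Rle_trans with (Rabs D * (eps / (Rabs D + 1))).
    - apply Rmult_le_compat_l; [apply Rabs_pos | exact HM].
    - apply (Rmult_le_reg_r (Rabs D + 1)); [lra|].
      field_simplify; [|lra]. pose proof (cond_pos eps); pose proof (Rabs_pos D); nra. }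
  replace (g u v - g x y - (dx g x y * (u - x) + dy g x y * (v - y)))
    with (g u v - (g x y + (dx g x y * (u - x) + dy g x y * (v - y)))) by ring.
  eapply Rle_trans; [exact Hd0|].
  pose proof (Rle_abs D). simpl. nra.
Qed.

(** * Circular integrals *)

Section Circle.
Variable g : R -> R -> R.
Hypothesis Hg : smooth2 g.

Lemma continuous_fcirc_p_phi r (z : R * R) :
  continuous (fun z : R * R => fcirc g (fst z) r (snd z)) z.
Proof.
  apply (smooth2_continuous_comp g Hg).
  - apply continuous_plus_R; [apply continuous_fst_R2|].
    apply continuous_mult_R; [apply continuous_const_R | apply continuous_sin_fun, continuous_snd_R2].
  - apply continuous_mult_R; [apply continuous_const_R | apply continuous_cos_fun, continuous_snd_R2].
Qed.

Lemma continuous_fcirc_r_phi p (z : R * R) :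
  continuous (fun z : R * R => fcirc g p (fst z) (snd z)) z.
Proof.
  apply (smooth2_continuous_comp g Hg).
  - apply continuous_plus_R; [apply continuous_const_R|].
    apply continuous_mult_R; [apply continuous_fst_R2 | apply continuous_sin_fun, continuous_snd_R2].
  - apply continuous_mult_R; [apply continuous_fst_R2 | apply continuous_cos_fun, continuous_snd_R2].
Qed.

Lemma continuous_R_fcirc p r : continuous_R (fun t => fcirc g p r t).
Proof.
  intros t. apply (smooth2_continuous_comp g Hg).
  - apply continuous_plus_R; [apply continuous_const_R|].
    apply continuous_mult_R; [apply continuous_const_R | apply continuous_sin_fun, continuous_id].
  - apply continuous_mult_R; [apply continuous_const_R | apply continuous_cos_fun, continuous_id].
Qed.

Lemma is_derive_fcirc_p q r t : is_derive (fun u => fcirc g u r t) q (fcirc (dx g) q r t).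
Proof.
  unfold fcirc.
  eapply is_derive_eq_val.
  - apply (is_derive_comp_R (fun s => g s (r * cos t)) (fun u => u + r * sin t)).
    + apply Derive_correct, smooth2_ex_derive_x; auto.
    + apply is_derive_plus_R; [apply is_derive_id_R | apply is_derive_const_R].
  - unfold dx. ring.
Qed.

Lemma is_derive_fcirc_r q r t :
  is_derive (fun s => fcirc g q s t) r (sin t * fcirc (dx g) q r t + cos t * fcirc (dy g) q r t).
Proof.
  unfold fcirc. apply is_derive_Reals.
  replace (sin t * dx g (q + r * sin t) (r * cos t) + cos t * dy g (q + r * sin t) (r * cos t))
    with (dx g (q + r * sin t) (r * cos t) * sin t + dy g (q + r * sin t) (r * cos t) * cos t) by ring.
  apply (derivable_pt_lim_comp_2d g (fun s => q + s * sin t) (fun s => s * cos t));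
    [apply smooth2_differentiable; auto | |]; apply is_derive_Reals.
  - eapply is_derive_eq_val; [apply is_derive_plus_R;
      [apply is_derive_const_R | apply (Derive.is_derive_mult (fun s => s) (fun _ => sin t));
        [apply is_derive_id_R | apply is_derive_const_R]]|]. ring.
  - eapply is_derive_eq_val; [apply (Derive.is_derive_mult (fun s => s) (fun _ => cos t));
      [apply is_derive_id_R | apply is_derive_const_R]|]. ring.
Qed.

Lemma is_derive_fcirc_phi q r t :
  is_derive (fun s => fcirc g q r s) t (r * cos t * fcirc (dx g) q r t - r * sin t * fcirc (dy g) q r t).
Proof.
  unfold fcirc. apply is_derive_Reals.
  replace (r * cos t * dx g (q + r * sin t) (r * cos t) - r * sin t * dy g (q + r * sin t) (r * cos t))
    with (dx g (q + r * sin t) (r * cos t) * (r * cos t) + dy g (q + r * sin t) (r * cos t) * (r * - sin t))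
    by ring.
  apply (derivable_pt_lim_comp_2d g (fun s => q + r * sin s) (fun s => r * cos s));
    [apply smooth2_differentiable; auto | |]; apply is_derive_Reals.
  - eapply is_derive_eq_val;
      [apply is_derive_plus_R; [apply is_derive_const_R | apply is_derive_scal, is_derive_sin]|]. ring.
  - apply is_derive_scal, is_derive_cos.
Qed.

End Circle.

Definition circ_moment g p r (w : R -> R) : R := RInt (fun t => fcirc g p r t * w t) (- PI) PI.

Definition circ_moment_r g p r (w : R -> R) : R :=
  RInt (fun t => (sin t * fcirc (dx g) p r t + cos t * fcirc (dy g) p r t) * w t) (- PI) PI.

Section CircMoment.
Variable g : R -> R -> R.
Hypothesis Hg : smooth2 g.

Lemma is_derive_circ_moment_p w p r : continuous_R w ->
  is_derive (fun q => circ_moment g q r w) p (circ_moment (dx g) p r w).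
Proof.
  intros Hw.
  apply (is_derive_RInt_param_R (fun q t => fcirc g q r t * w t) (fun q t => fcirc (dx g) q r t * w t)).
  - intros u t. eapply is_derive_eq_val.
    + apply (Derive.is_derive_mult (fun s => fcirc g s r t) (fun _ => w t));
        [apply is_derive_fcirc_p; auto | apply is_derive_const_R].
    + ring.
  - intros z. apply continuous_mult_R;
      [apply continuous_fcirc_p_phi, smooth2_dx; auto | apply continuous_R_snd; auto].
  - intros u. apply continuous_R_mult; auto. apply continuous_R_fcirc; auto.
Qed.

Lemma is_derive_circ_moment_r w p r : continuous_R w ->
  is_derive (fun s => circ_moment g p s w) r (circ_moment_r g p r w).
Proof.
  intros Hw.
  apply (is_derive_RInt_param_R (fun s t => fcirc g p s t * w t)
     (fun s t => (sin t * fcirc (dx g) p s t + cos t * fcirc (dy g) p s t) * w t)).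
  - intros u t. eapply is_derive_eq_val.
    + apply (Derive.is_derive_mult (fun s => fcirc g p s t) (fun _ => w t));
        [apply is_derive_fcirc_r; auto | apply is_derive_const_R].
    + ring.
  - intros z. apply continuous_mult_R; [|apply continuous_R_snd; auto].
    apply continuous_plus_R; apply continuous_mult_R.
    + apply continuous_sin_fun, continuous_snd_R2.
    + apply continuous_fcirc_r_phi, smooth2_dx; auto.
    + apply continuous_cos_fun, continuous_snd_R2.
    + apply continuous_fcirc_r_phi, smooth2_dy; auto.
  - intros u. apply continuous_R_mult; auto. apply continuous_R_fcirc; auto.
Qed.

Lemma continuous_R_fcirc_r p r :
  continuous_R (fun t => sin t * fcirc (dx g) p r t + cos t * fcirc (dy g) p r t).
Proof.
  apply continuous_R_plus; apply continuous_R_mult;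
    auto using continuous_R_sin, continuous_R_cos, continuous_R_fcirc, smooth2_dx, smooth2_dy.
Qed.

Lemma circ_moment_lincomb p r w1 w2 c1 c2 : continuous_R w1 -> continuous_R w2 ->
  circ_moment g p r (fun t => c1 * w1 t + c2 * w2 t)
  = c1 * circ_moment g p r w1 + c2 * circ_moment g p r w2.
Proof.
  intros H1 H2. unfold circ_moment.
  rewrite <- RInt_lincomb by (apply continuous_R_mult; auto; apply continuous_R_fcirc; auto).
  apply RInt_ext_R. intros; ring.
Qed.

Lemma circ_moment_r_lincomb p r w1 w2 c1 c2 : continuous_R w1 -> continuous_R w2 ->
  circ_moment_r g p r (fun t => c1 * w1 t + c2 * w2 t)
  = c1 * circ_moment_r g p r w1 + c2 * circ_moment_r g p r w2.
Proof.
  intros H1 H2. unfold circ_moment_r.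
  rewrite <- RInt_lincomb by (apply continuous_R_mult; auto; apply continuous_R_fcirc_r).
  apply RInt_ext_R. intros; ring.
Qed.

Lemma circ_moment_scal p r w c : continuous_R w ->
  circ_moment g p r (fun t => c * w t) = c * circ_moment g p r w.
Proof.
  intros Hw. unfold circ_moment.
  rewrite <- RInt_scal_R by (apply continuous_R_mult; auto; apply continuous_R_fcirc; auto).
  apply RInt_ext_R; intros; ring.
Qed.

(* Split [f_x] along the radial and angular directions, [f_x = sin * d_r f + cos * d_phi f / r],
   and integrate the angular part by parts. *)
Lemma circ_moment_dx_by_parts p r w sw dv : r <> 0 ->
  continuous_R w -> continuous_R sw -> continuous_R dv ->
  (forall t, sin t * w t = sw t) ->
  (forall t, is_derive (fun s => cos s * w s) t (dv t)) ->
  cos (- PI) * w (- PI) = cos PI * w PI ->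
  circ_moment (dx g) p r w = circ_moment_r g p r sw - / r * circ_moment g p r dv.
Proof.
  intros Hr Hw Hsw Hdv Esw Ddv Eper.
  set (Fr := fun t => sin t * fcirc (dx g) p r t + cos t * fcirc (dy g) p r t).
  set (Fphi := fun t => r * cos t * fcirc (dx g) p r t - r * sin t * fcirc (dy g) p r t).
  assert (CFphi : continuous_R Fphi).
  { intros x. apply continuous_minus_R; apply continuous_mult_R.
    - apply continuous_mult_R; [apply continuous_const_R | apply continuous_cos].
    - apply continuous_R_fcirc, smooth2_dx; auto.
    - apply continuous_mult_R; [apply continuous_const_R | apply continuous_sin].
    - apply continuous_R_fcirc, smooth2_dy; auto. }
  assert (Split : forall t, fcirc (dx g) p r t * w t = 1 * (Fr t * sw t) + / r * (Fphi t * (cos t * w t))).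
  { intros t. rewrite <- Esw. unfold Fr, Fphi. pose proof (sin2_cos2 t) as E. unfold Rsqr in E.
    transitivity (fcirc (dx g) p r t * w t * (sin t * sin t + cos t * cos t));
      [rewrite E; ring | field; auto]. }
  assert (IBP : RInt (fun t => Fphi t * (cos t * w t)) (- PI) PI = - circ_moment g p r dv).
  { apply RInt_by_parts_periodic; auto.
    - intros t. apply is_derive_fcirc_phi; auto.
    - unfold fcirc. rewrite sin_neg, cos_neg, sin_PI, Ropp_0.
      rewrite cos_neg in Eper. rewrite <- Eper. ring. }
  unfold circ_moment at 1. rewrite (RInt_ext_R _ _ _ _ Split), RInt_lincomb, IBP.
  - unfold circ_moment_r, Fr. ring.
  - apply continuous_R_mult; auto. apply continuous_R_fcirc_r.
  - apply continuous_R_mult; auto. apply continuous_R_mult; auto. apply continuous_R_cos.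
Qed.

End CircMoment.

Definition cosn (n : nat) (t : R) := cos (INR n * t).
Definition sinn (n : nat) (t : R) := sin (INR n * t).

Lemma continuous_R_cosn n : continuous_R (cosn n).
Proof.
  intros x; apply continuous_cos_fun, continuous_mult_R; [apply continuous_const_R | apply continuous_id].
Qed.

Lemma continuous_R_sinn n : continuous_R (sinn n).
Proof.
  intros x; apply continuous_sin_fun, continuous_mult_R; [apply continuous_const_R | apply continuous_id].
Qed.

Lemma continuous_R_lincomb f h c1 c2 : continuous_R f -> continuous_R h ->
  continuous_R (fun x => c1 * f x + c2 * h x).
Proof. intros; apply continuous_R_plus; apply continuous_R_mult; auto; apply continuous_R_const. Qed.

Lemma sin_INR_mult_PI k : sin (INR k * PI) = 0.
Proof.
  induction k as [|k IH]; [simpl; rewrite Rmult_0_l; apply sin_0|].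
  rewrite S_INR, Rmult_plus_distr_r, Rmult_1_l, sin_plus, IH, sin_PI. ring.
Qed.

Lemma is_derive_sinn n t : is_derive (sinn n) t (INR n * cosn n t).
Proof.
  eapply is_derive_eq_val.
  - apply (is_derive_comp_R sin (fun s => INR n * s)); [apply is_derive_sin|].
    apply is_derive_scal, is_derive_id_R.
  - unfold cosn. ring.
Qed.

Lemma is_derive_cosn n t : is_derive (cosn n) t (- INR n * sinn n t).
Proof.
  eapply is_derive_eq_val.
  - apply (is_derive_comp_R cos (fun s => INR n * s)); [apply is_derive_cos|].
    apply is_derive_scal, is_derive_id_R.
  - unfold sinn. ring.
Qed.

Lemma INR_mult_pred n t : INR n * t = INR (S n) * t - t.
Proof. rewrite S_INR; ring. Qed.

Lemma INR_mult_succ n t : INR (S (S n)) * t = INR (S n) * t + t.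
Proof. rewrite (S_INR (S n)); ring. Qed.

Lemma sin_mult_sinn n t : sin t * sinn (S n) t = / 2 * cosn n t + (- / 2) * cosn (S (S n)) t.
Proof. unfold sinn, cosn. rewrite (INR_mult_pred n t), (INR_mult_succ n t), cos_minus, cos_plus. field. Qed.

Lemma cos_mult_sinn n t : cos t * sinn (S n) t = / 2 * sinn (S (S n)) t + / 2 * sinn n t.
Proof. unfold sinn. rewrite (INR_mult_pred n t), (INR_mult_succ n t), sin_minus, sin_plus. field. Qed.

Lemma sin_mult_cosn n t : sin t * cosn (S n) t = / 2 * sinn (S (S n)) t + (- / 2) * sinn n t.
Proof. unfold sinn, cosn. rewrite (INR_mult_pred n t), (INR_mult_succ n t), sin_minus, sin_plus. field. Qed.

Lemma cos_mult_cosn n t : cos t * cosn (S n) t = / 2 * cosn (S (S n)) t + / 2 * cosn n t.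
Proof. unfold cosn. rewrite (INR_mult_pred n t), (INR_mult_succ n t), cos_minus, cos_plus. field. Qed.

Section Recurrences.
Variable g : R -> R -> R.
Hypothesis Hg : smooth2 g.

Lemma circ_moment_dx_sinn p r n : r <> 0 ->
  circ_moment (dx g) p r (sinn (S n)) =
    / 2 * circ_moment_r g p r (cosn n) + (- / 2) * circ_moment_r g p r (cosn (S (S n)))
    - / r * (INR n / 2 * circ_moment g p r (cosn n)
             + INR (S (S n)) / 2 * circ_moment g p r (cosn (S (S n)))).
Proof.
  intros Hr.
  rewrite (circ_moment_dx_by_parts g Hg p r (sinn (S n))
             (fun t => / 2 * cosn n t + (- / 2) * cosn (S (S n)) t)
             (fun t => INR n / 2 * cosn n t + INR (S (S n)) / 2 * cosn (S (S n)) t) Hr);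
    try apply continuous_R_lincomb; try apply continuous_R_sinn; try apply continuous_R_cosn.
  - rewrite circ_moment_r_lincomb, circ_moment_lincomb; auto using continuous_R_cosn.
  - apply sin_mult_sinn.
  - intros t. apply (is_derive_ext (fun s => / 2 * sinn (S (S n)) s + / 2 * sinn n s)).
    { intros s; symmetry; apply cos_mult_sinn. }
    eapply is_derive_eq_val;
      [apply is_derive_plus_R; apply is_derive_scal, is_derive_sinn | field].
  - unfold sinn. rewrite cos_neg. replace (INR (S n) * - PI) with (- (INR (S n) * PI)) by ring.
    rewrite sin_neg, sin_INR_mult_PI. ring.
Qed.

Lemma circ_moment_dx_cosn p r n : r <> 0 ->
  circ_moment (dx g) p r (cosn (S n)) =
    / 2 * circ_moment_r g p r (sinn (S (S n))) + (- / 2) * circ_moment_r g p r (sinn n)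
    - / r * ((- INR (S (S n)) / 2) * circ_moment g p r (sinn (S (S n)))
             + (- INR n / 2) * circ_moment g p r (sinn n)).
Proof.
  intros Hr.
  rewrite (circ_moment_dx_by_parts g Hg p r (cosn (S n))
             (fun t => / 2 * sinn (S (S n)) t + (- / 2) * sinn n t)
             (fun t => (- INR (S (S n)) / 2) * sinn (S (S n)) t + (- INR n / 2) * sinn n t) Hr);
    try apply continuous_R_lincomb; try apply continuous_R_sinn; try apply continuous_R_cosn.
  - rewrite circ_moment_r_lincomb, circ_moment_lincomb; auto using continuous_R_sinn.
  - apply sin_mult_cosn.
  - intros t. apply (is_derive_ext (fun s => / 2 * cosn (S (S n)) s + / 2 * cosn n s)).
    { intros s; symmetry; apply cos_mult_cosn. }
    eapply is_derive_eq_val;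
      [apply is_derive_plus_R; apply is_derive_scal, is_derive_cosn | field].
  - unfold cosn. rewrite cos_neg. replace (INR (S n) * - PI) with (- (INR (S n) * PI)) by ring.
    rewrite cos_neg. ring.
Qed.

Lemma circ_moment_dx_const p r : r <> 0 ->
  circ_moment (dx g) p r (fun _ => 1) = circ_moment_r g p r (sinn 1) + / r * circ_moment g p r (sinn 1).
Proof.
  intros Hr.
  rewrite (circ_moment_dx_by_parts g Hg p r (fun _ => 1) (sinn 1) (fun t => -1 * sinn 1 t) Hr);
    try apply continuous_R_mult; try apply continuous_R_const; try apply continuous_R_sinn.
  - rewrite (circ_moment_scal g Hg) by apply continuous_R_sinn. ring.
  - intros t. unfold sinn. simpl. rewrite Rmult_1_l; ring.
  - intros t. eapply is_derive_eq_val.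
    + apply (Derive.is_derive_mult cos (fun _ => 1)); [apply is_derive_cos | apply is_derive_const_R].
    + unfold sinn. simpl. rewrite Rmult_1_l. ring.
  - rewrite cos_neg; ring.
Qed.

End Recurrences.

Definition smooth_zero_below (c : R) (g : R -> R -> R) :=
  smooth2 g /\ 0 < c /\ forall x y, y < c -> g x y = 0.

Lemma smooth_zero_below_dx c g : smooth_zero_below c g -> smooth_zero_below c (dx g).
Proof.
  intros [H1 [H2 H3]]. split; [apply smooth2_dx; auto|]. split; auto.
  intros x y Hy. unfold dx. rewrite (Derive_ext _ (fun _ => 0)); [apply Derive_const|].
  intros t; apply H3; auto.
Qed.

Fixpoint dxn (m : nat) (g : R -> R -> R) : R -> R -> R :=
  match m with O => g | S m => dx (dxn m g) end.

Lemma dxn_dx m g : dxn m (dx g) = dxn (S m) g.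
Proof. induction m as [|m IH]; simpl; auto. simpl in IH. rewrite IH. reflexivity. Qed.

Lemma smooth_zero_below_dxn c m g : smooth_zero_below c g -> smooth_zero_below c (dxn m g).
Proof. induction m; simpl; auto. intros; apply smooth_zero_below_dx; auto. Qed.

Lemma Mf_circ_moment g p r : Mf g p r = / (2 * PI) * circ_moment g p r (fun _ => 1).
Proof. unfold Mf, circ_moment. f_equal. apply RInt_ext_R; intros; ring. Qed.

Lemma a_coef_circ_moment g n p r : a_coef g n p r = / PI * circ_moment g p r (cosn n).
Proof. reflexivity. Qed.

Lemma b_coef_circ_moment g n p r : b_coef g n p r = / PI * circ_moment g p r (sinn n).
Proof. reflexivity. Qed.

Lemma is_derive_Mf_p g p u : smooth2 g -> is_derive (fun q => Mf g q u) p (Mf (dx g) p u).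
Proof.
  intros H. apply is_derive_ext with (fun q => / (2 * PI) * circ_moment g q u (fun _ => 1)).
  { intros; symmetry; apply Mf_circ_moment. }
  rewrite Mf_circ_moment. apply is_derive_scal, is_derive_circ_moment_p; auto. apply continuous_R_const.
Qed.

Lemma is_derive_Mf_r g p r : smooth2 g ->
  is_derive (fun s => Mf g p s) r (/ (2 * PI) * circ_moment_r g p r (fun _ => 1)).
Proof.
  intros H. apply is_derive_ext with (fun s => / (2 * PI) * circ_moment g p s (fun _ => 1)).
  { intros; symmetry; apply Mf_circ_moment. }
  apply is_derive_scal, is_derive_circ_moment_r; auto. apply continuous_R_const.
Qed.

Section Smooth.
Variable g : R -> R -> R.
Hypothesis Hg : smooth2 g.

Lemma smooth2_dxn m : smooth2 (dxn m g).
Proof. induction m; simpl; auto using smooth2_dx. Qed.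

Lemma dpMf_dxn m p u : dpMf g m p u = Mf (dxn m g) p u.
Proof.
  unfold dpMf. revert p. induction m as [|m IH]; intros p; simpl; auto.
  rewrite (Derive_ext _ (fun q => Mf (dxn m g) q u)); auto.
  apply is_derive_unique, is_derive_Mf_p, smooth2_dxn.
Qed.

Lemma continuous_R_Mf_dxn p m : continuous_R (fun u => Mf (dxn m g) p u).
Proof.
  intros u. apply (ex_derive_continuous (K := R_AbsRing) (V := R_NormedModule)).
  eexists. apply is_derive_Mf_r, smooth2_dxn.
Qed.

End Smooth.

(* The circle of radius [|r| < c] about [(p, 0)] lies in the strip [y < c] where [g] vanishes. *)
Lemma circ_moment_vanish c g p r w : smooth_zero_below c g -> Rabs r < c -> circ_moment g p r w = 0.
Proof.
  intros Hg Hr. destruct Hg as [_ [_ H]]. unfold circ_moment.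
  rewrite (RInt_ext_R _ (fun _ => 0)); [rewrite RInt_const_R; ring|].
  intros t. unfold fcirc. rewrite H; [ring|].
  pose proof (COS_bound t). pose proof (Rabs_pos r).
  destruct (Rle_dec 0 r); [rewrite Rabs_right in Hr | rewrite Rabs_left in Hr]; nra.
Qed.

Lemma Mf_dxn_vanish c g p m u : smooth_zero_below c g -> Rabs u < c -> Mf (dxn m g) p u = 0.
Proof.
  intros Hg Hu. rewrite Mf_circ_moment, (circ_moment_vanish c); [ring | |auto].
  apply smooth_zero_below_dxn; auto.
Qed.

Definition dsum N (f : nat -> nat -> R) := sum_n_m (fun i => sum_n_m (fun j => f i j) 1 N) 0 N.

Lemma dsum_plus N f h : dsum N (fun i j => f i j + h i j) = dsum N f + dsum N h.
Proof. unfold dsum. rewrite <- sum_n_m_plus_R. apply sum_n_m_ext_R. intros; apply sum_n_m_plus_R. Qed.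

Lemma dsum_mult_l N f c : dsum N (fun i j => c * f i j) = c * dsum N f.
Proof. unfold dsum. rewrite <- sum_n_m_mult_l_R. apply sum_n_m_ext_R. intros; apply sum_n_m_mult_l_R. Qed.

Lemma dsum_ext N f h : (forall i j, (i <= N)%nat -> (1 <= j <= N)%nat -> f i j = h i j) ->
  dsum N f = dsum N h.
Proof. intros H. apply sum_n_m_ext_R. intros i Hi. apply sum_n_m_ext_R. intros j Hj. apply H; lia. Qed.

Lemma dsum_eq0 N f : (forall i j, (i <= N)%nat -> (1 <= j <= N)%nat -> f i j = 0) -> dsum N f = 0.
Proof. intros H. apply sum_n_m_eq0. intros i Hi. apply sum_n_m_eq0. intros j Hj. apply H; lia. Qed.

Definition row_sums (c : nat -> nat -> R) N (E : nat -> R) : R :=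
  sum_n_m (fun i => sum_n_m (fun j => c i j) 1 N * E i) 0 N.

Definition kernel_term (h : nat -> R -> R) (e : nat) i j r :=
  r ^ (2 * i) * radial_moment (h i) (2 * j - 1) r / r ^ e.

(* [kernel_sum h e c N r = int_0^r sum_i r^(2i-e) (sum_j c i j (u/r)^(2j-1)) h i u du], the shape
   of the right-hand sides of the theorem (see [kernel_sum_restrict] and [RInt_oddpoly_sum]). *)
Definition kernel_sum (h : nat -> R -> R) (e : nat) (c : nat -> nat -> R) N r :=
  dsum N (fun i j => c i j * kernel_term h e i j r).

Definition kernel_sum_deriv (h : nat -> R -> R) (e : nat) (c : nat -> nat -> R) N r :=
  dsum N (fun i j => c i j * ((INR (2 * i) - INR e - INR (2 * j - 1)) * kernel_term h e i j r / r))
  + row_sums c N (fun i => r ^ (2 * i) * h i r / r ^ e).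

Lemma is_derive_kernel_term h e i j r : continuous_R (h i) -> r <> 0 ->
  is_derive (kernel_term h e i j) r
    ((INR (2 * i) - INR e - INR (2 * j - 1)) * kernel_term h e i j r / r + r ^ (2 * i) * h i r / r ^ e).
Proof.
  intros Hh Hr. unfold kernel_term.
  assert (He : r ^ e <> 0) by (apply pow_nonzero; auto).
  eapply is_derive_eq_val.
  - apply (Derive.is_derive_mult (fun s => s ^ (2 * i) * radial_moment (h i) (2 * j - 1) s) (fun s => / s ^ e));
      [apply (Derive.is_derive_mult (fun s => s ^ (2 * i))) |].
    + apply is_derive_pow_id.
    + apply is_derive_radial_moment; auto.
    + apply is_derive_inv_pow; auto.
  - rewrite !Rmult_1_r, !INR_pow_pred by auto. field. split; auto.
Qed.

Lemma is_derive_kernel_sum h e c N r : (forall i, continuous_R (h i)) -> r <> 0 ->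
  is_derive (kernel_sum h e c N) r (kernel_sum_deriv h e c N r).
Proof.
  intros Hh Hr. unfold kernel_sum, kernel_sum_deriv, row_sums, dsum.
  set (dterm := fun i j y =>
    (INR (2 * i) - INR e - INR (2 * j - 1)) * kernel_term h e i j y / y + y ^ (2 * i) * h i y / y ^ e).
  eapply is_derive_eq_val.
  - apply (is_derive_sum_n_m (fun i y => sum_n_m (fun j => c i j * kernel_term h e i j y) 1 N)
             (fun i y => sum_n_m (fun j => c i j * dterm i j y) 1 N)).
    intros i _.
    apply (is_derive_sum_n_m (fun j y => c i j * kernel_term h e i j y) (fun j y => c i j * dterm i j y)).
    intros j _. apply is_derive_scal, is_derive_kernel_term; auto.
  - rewrite <- sum_n_m_plus_R. apply sum_n_m_ext_R. intros i _.
    rewrite <- sum_n_m_mult_r_R, <- sum_n_m_plus_R. apply sum_n_m_ext_R. intros j _. unfold dterm. ring.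
Qed.

Lemma kernel_sum_vanish h e c N r c0 : (forall i u, Rabs u < c0 -> h i u = 0) -> 0 < r < c0 ->
  kernel_sum h e c N r = 0.
Proof.
  intros Hh Hr. apply dsum_eq0. intros i j _ _. unfold kernel_term.
  rewrite (radial_moment_vanish (h i) _ r c0); auto. unfold Rdiv; ring.
Qed.

Lemma kernel_sum_euler h e c N r q : r <> 0 ->
  r * kernel_sum_deriv h e c N r + q * kernel_sum h e c N r =
  dsum N (fun i j => c i j * (2 * INR i - INR e - 2 * INR j + 1 + q) * kernel_term h e i j r)
  + row_sums c N (fun i => r ^ (2 * i) * h i r / r ^ e * r).
Proof.
  intros Hr. unfold kernel_sum_deriv, kernel_sum, row_sums.
  rewrite Rmult_plus_distr_l, <- !dsum_mult_l, <- sum_n_m_mult_l_R.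
  rewrite Rplus_assoc, (Rplus_comm (sum_n_m _ 0 N)), <- Rplus_assoc, <- dsum_plus.
  f_equal.
  - apply dsum_ext. intros i j Hi Hj.
    rewrite mult_INR, minus_INR, mult_INR by lia. simpl. field; auto.
  - apply sum_n_m_ext_R. intros; field. apply pow_nonzero; auto.
Qed.

(** * The coefficient recursion *)

Definition coef := nat -> nat -> R.

(* Row [i] of the next coefficient arrays: the entries [j < k + 1 + i] solve [coefA_succ_rel]
   (resp. [coefB_succ_rel]) below, whose factor vanishes at [j = k + 1 + i]; that last entry is
   fixed by the row sum instead ([coefA_succ_row_sum], [coefB_succ_row_sum]). *)
Definition nextA_low k (a b : coef) i j :=
  (a i j * (2 * INR i - 2 * INR j - 2 * INR k) - 2 * b i j) / (2 * INR i - 2 * INR j + 2 * INR k + 2).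
Definition nextA_top k (a b : coef) i :=
  sum_n_m (fun j => a i j) 1 (k + i) - sum_n_m (fun j => nextA_low k a b i j) 1 (k + i)
  - (if (i =? 0)%nat then 8 * INR k + 4 else 0).
Definition nextA k (a b : coef) : coef := fun i j =>
  if (j <? S k + i)%nat then nextA_low k a b i j
  else if (j =? S k + i)%nat then nextA_top k a b i else 0.

Definition shift_row (a : coef) : coef := fun i j => if (i =? 0)%nat then 0 else a (pred i) j.

Definition nextB_low k (a' b : coef) i j :=
  (2 * shift_row a' i j + b i j * (2 * INR i - 2 * INR j - 2 * INR k - 2))
  / (2 * INR i - 2 * INR j + 2 * INR k + 2).
Definition nextB_top k (a' b : coef) i :=
  sum_n_m (fun j => b i j) 1 (k + i) + (if (i =? 1)%nat then 4 else 0)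
  - sum_n_m (fun j => nextB_low k a' b i j) 1 (k + i).
Definition nextB k (a' b : coef) : coef := fun i j =>
  if (i =? 0)%nat then 0
  else if (j <? S k + i)%nat then nextB_low k a' b i j
  else if (j =? S k + i)%nat then nextB_top k a' b i else 0.

Definition coefB_init : coef := fun i j => if andb (i =? 1)%nat (j =? 1)%nat then 2 else 0.

Fixpoint coefAB (k : nat) : coef * coef :=
  match k with
  | O => ((fun _ _ => 0), coefB_init)
  | S k => let (a, b) := coefAB k in let a' := nextA k a b in (a', nextB k a' b)
  end.

Definition coefA k := fst (coefAB k).
Definition coefB k := snd (coefAB k).

Lemma coefA_succ k : coefA (S k) = nextA k (coefA k) (coefB k).
Proof. unfold coefA, coefB; simpl. destruct (coefAB k); reflexivity. Qed.

Lemma coefB_succ k : coefB (S k) = nextB k (coefA (S k)) (coefB k).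
Proof. rewrite coefA_succ. unfold coefA, coefB; simpl. destruct (coefAB k); reflexivity. Qed.

Lemma coef_support k :
  (forall i j, ((k < i)%nat \/ (k + i < j)%nat) -> coefA k i j = 0) /\
  (forall i j, (i = 0%nat \/ (S k < i)%nat \/ (k + i < j)%nat) -> coefB k i j = 0).
Proof.
  induction k as [|k [IHa IHb]].
  - split; intros i j H; [reflexivity|].
    unfold coefB; simpl; unfold coefB_init.
    destruct (i =? 1)%nat eqn:E1; destruct (j =? 1)%nat eqn:E2; simpl; auto.
    apply Nat.eqb_eq in E1, E2. lia.
  - assert (HA : forall i j, ((S k < i)%nat \/ (S k + i < j)%nat) -> coefA (S k) i j = 0).
    { intros i j H. rewrite coefA_succ. unfold nextA.
      destruct (j <? S k + i)%nat eqn:E1; [|destruct (j =? S k + i)%nat eqn:E2; auto].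
      - apply Nat.ltb_lt in E1. destruct H as [H|H]; [|lia].
        unfold nextA_low. rewrite IHa, IHb by lia. unfold Rdiv; ring.
      - apply Nat.eqb_eq in E2. destruct H as [H|H]; [|lia].
        unfold nextA_top. rewrite !sum_n_m_eq0.
        + destruct (i =? 0)%nat eqn:E3; [apply Nat.eqb_eq in E3; lia | ring].
        + intros; unfold nextA_low. rewrite IHa, IHb by lia. unfold Rdiv; ring.
        + intros; apply IHa; lia. }
    split; auto.
    intros i j H. rewrite coefB_succ. unfold nextB.
    destruct (i =? 0)%nat eqn:E0; auto. apply Nat.eqb_neq in E0.
    destruct (j <? S k + i)%nat eqn:E1; [|destruct (j =? S k + i)%nat eqn:E2; auto].
    + apply Nat.ltb_lt in E1. destruct H as [H|[H|H]]; try lia.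
      unfold nextB_low, shift_row. rewrite HA, IHb by lia.
      destruct (i =? 0)%nat; unfold Rdiv; ring.
    + apply Nat.eqb_eq in E2. destruct H as [H|[H|H]]; try lia.
      unfold nextB_top. rewrite !sum_n_m_eq0.
      * destruct (i =? 1)%nat eqn:E3; [apply Nat.eqb_eq in E3; lia | ring].
      * intros; unfold nextB_low, shift_row. rewrite HA, IHb by lia.
        destruct (i =? 0)%nat; unfold Rdiv; ring.
      * intros; apply IHb; lia.
Qed.

Lemma coefA_support k i j : ((k < i)%nat \/ (k + i < j)%nat) -> coefA k i j = 0.
Proof. apply (proj1 (coef_support k)). Qed.

Lemma coefB_support k i j : (i = 0%nat \/ (S k < i)%nat \/ (k + i < j)%nat) -> coefB k i j = 0.
Proof. apply (proj2 (coef_support k)). Qed.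

Lemma denom_pos i j k : (j < S k + i)%nat -> 0 < 2 * INR i - 2 * INR j + 2 * INR k + 2.
Proof. intros H. assert (H' : (j <= k + i)%nat) by lia. apply le_INR in H'. rewrite plus_INR in H'. lra. Qed.

Lemma denom_top i j k : j = (S k + i)%nat -> 2 * INR i - 2 * INR j + 2 * INR k + 2 = 0.
Proof. intros ->. rewrite plus_INR, S_INR. ring. Qed.

Lemma coefA_succ_rel k i j :
  coefA (S k) i j * (2 * INR i - 2 * INR j + 2 * INR k + 2) =
  coefA k i j * (2 * INR i - 2 * INR j - 2 * INR k) - 2 * coefB k i j.
Proof.
  rewrite coefA_succ. unfold nextA.
  destruct (j <? S k + i)%nat eqn:E1.
  - apply Nat.ltb_lt in E1. pose proof (denom_pos i j k E1). unfold nextA_low. field. lra.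
  - apply Nat.ltb_ge in E1. rewrite coefA_support, coefB_support by lia.
    destruct (j =? S k + i)%nat eqn:E2; [apply Nat.eqb_eq in E2; rewrite (denom_top i j k E2)|]; ring.
Qed.

Lemma coefA_succ_row_sum k i :
  (sum_n_m (fun j => coefA (S k) i j) 1 (S k + i) : R) =
  sum_n_m (fun j => coefA k i j) 1 (k + i) - (if (i =? 0)%nat then 8 * INR k + 4 else 0).
Proof.
  replace (S k + i)%nat with (S (k + i)) by lia.
  rewrite sum_n_m_last by lia. rewrite coefA_succ.
  rewrite (sum_n_m_ext_R _ (fun j => nextA_low k (coefA k) (coefB k) i j)).
  - unfold nextA. rewrite Nat.ltb_irrefl, Nat.eqb_refl. unfold nextA_top. ring.
  - intros j Hj. unfold nextA. destruct (j <? S k + i)%nat eqn:E; auto. apply Nat.ltb_ge in E; lia.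
Qed.

Lemma coefB_succ_rel k i j :
  coefB (S k) i j * (2 * INR i - 2 * INR j + 2 * INR k + 2) =
  2 * shift_row (coefA (S k)) i j + coefB k i j * (2 * INR i - 2 * INR j - 2 * INR k - 2).
Proof.
  rewrite coefB_succ. unfold nextB.
  destruct (i =? 0)%nat eqn:E0.
  - apply Nat.eqb_eq in E0. subst. unfold shift_row. simpl. rewrite coefB_support by lia. ring.
  - apply Nat.eqb_neq in E0.
    destruct (j <? S k + i)%nat eqn:E1.
    + apply Nat.ltb_lt in E1. pose proof (denom_pos i j k E1). unfold nextB_low. field. lra.
    + apply Nat.ltb_ge in E1. unfold shift_row. rewrite (proj2 (Nat.eqb_neq i 0) E0).
      rewrite coefA_support, coefB_support by lia.
      destruct (j =? S k + i)%nat eqn:E2; [apply Nat.eqb_eq in E2; rewrite (denom_top i j k E2)|]; ring.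
Qed.

Lemma coefB_succ_row_sum k i : (1 <= i)%nat ->
  (sum_n_m (fun j => coefB (S k) i j) 1 (S k + i) : R) =
  sum_n_m (fun j => coefB k i j) 1 (k + i) + (if (i =? 1)%nat then 4 else 0).
Proof.
  intros Hi.
  replace (S k + i)%nat with (S (k + i)) by lia.
  rewrite sum_n_m_last by lia. rewrite coefB_succ.
  assert (E0 : (i =? 0)%nat = false) by (apply Nat.eqb_neq; lia).
  rewrite (sum_n_m_ext_R _ (fun j => nextB_low k (coefA (S k)) (coefB k) i j)).
  - unfold nextB. rewrite E0, Nat.ltb_irrefl, Nat.eqb_refl. unfold nextB_top. ring.
  - intros j Hj. unfold nextB. rewrite E0.
    destruct (j <? S k + i)%nat eqn:E; auto. apply Nat.ltb_ge in E; lia.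
Qed.

Lemma coefB_0_rel i j : coefB 0 i j * (2 * INR i - 2 * INR j) = 0.
Proof.
  unfold coefB; simpl; unfold coefB_init.
  destruct (i =? 1)%nat eqn:E1; destruct (j =? 1)%nat eqn:E2; simpl; try ring.
  apply Nat.eqb_eq in E1, E2. subst. ring.
Qed.

Lemma coefA_succ_row_sum_N k i N : (2 * S k <= N)%nat ->
  (sum_n_m (fun j => coefA (S k) i j) 1 N : R) =
  sum_n_m (fun j => coefA k i j) 1 N + (if (i =? 0)%nat then - (8 * INR k + 4) else 0).
Proof.
  intros HN. destruct (le_lt_dec i (S k)) as [H|H].
  - rewrite <- (sum_n_m_extend (fun j => coefA (S k) i j) 1 (S k + i) N),
      <- (sum_n_m_extend (fun j => coefA k i j) 1 (k + i) N), coefA_succ_row_sum;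
      try (intros; apply coefA_support); try lia.
    destruct (i =? 0)%nat; ring.
  - rewrite !sum_n_m_eq0 by (intros; apply coefA_support; lia).
    rewrite (proj2 (Nat.eqb_neq i 0)) by lia. ring.
Qed.

Lemma coefB_succ_row_sum_N k i N : (2 * S k + 1 <= N)%nat ->
  (sum_n_m (fun j => coefB (S k) i j) 1 N : R) =
  sum_n_m (fun j => coefB k i j) 1 N + (if (i =? 1)%nat then 4 else 0).
Proof.
  intros HN. destruct (le_lt_dec i (S (S k))) as [H|H]; [destruct (Nat.eq_dec i 0) as [->|Hi0]|].
  - rewrite !sum_n_m_eq0 by (intros; apply coefB_support; lia). simpl. ring.
  - rewrite <- (sum_n_m_extend (fun j => coefB (S k) i j) 1 (S k + i) N),
      <- (sum_n_m_extend (fun j => coefB k i j) 1 (k + i) N), coefB_succ_row_sum;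
      try (intros; apply coefB_support); try lia; reflexivity.
  - rewrite !sum_n_m_eq0 by (intros; apply coefB_support; lia).
    rewrite (proj2 (Nat.eqb_neq i 1)) by lia. ring.
Qed.

Lemma coefB_0_row_sum_N i N : (1 <= N)%nat ->
  (sum_n_m (fun j => coefB 0 i j) 1 N : R) = if (i =? 1)%nat then 2 else 0.
Proof.
  intros HN. unfold coefB; simpl; unfold coefB_init.
  destruct (i =? 1)%nat eqn:E; simpl.
  - rewrite <- (sum_n_m_extend _ 1 1 N), sum_n_n_R; auto.
    intros j Hj. rewrite (proj2 (Nat.eqb_neq j 1)) by lia. reflexivity.
  - apply sum_n_m_eq0. reflexivity.
Qed.

Lemma row_sums_coefA_succ k N E : (2 * S k <= N)%nat ->
  row_sums (coefA (S k)) N E = row_sums (coefA k) N E - (8 * INR k + 4) * E 0%nat.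
Proof.
  intros HN. unfold row_sums.
  rewrite (sum_n_m_plus_indicator _ (fun i => sum_n_m (fun j => coefA k i j) 1 N * E i)
             (- (8 * INR k + 4) * E 0%nat) 0); [ring | lia|].
  intros i _. rewrite coefA_succ_row_sum_N by auto. destruct (i =? 0)%nat eqn:Ei;
    [apply Nat.eqb_eq in Ei; subst|]; ring.
Qed.

Lemma row_sums_coefB_succ k N E : (2 * S k + 1 <= N)%nat ->
  row_sums (coefB (S k)) N E = row_sums (coefB k) N E + 4 * E 1%nat.
Proof.
  intros HN. unfold row_sums.
  apply (sum_n_m_plus_indicator _ (fun i => sum_n_m (fun j => coefB k i j) 1 N * E i) (4 * E 1%nat) 1); [lia|].
  intros i _. rewrite coefB_succ_row_sum_N by auto.
  destruct (i =? 1)%nat eqn:Ei; [apply Nat.eqb_eq in Ei; subst|]; ring.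
Qed.

Lemma row_sums_coefB_0 N E : (1 <= N)%nat -> row_sums (coefB 0) N E = 2 * E 1%nat.
Proof.
  intros HN. unfold row_sums.
  rewrite (sum_n_m_plus_indicator _ (fun _ => 0) (2 * E 1%nat) 1); [| lia |].
  - rewrite sum_n_m_eq0 by auto. ring.
  - intros i _. rewrite coefB_0_row_sum_N by auto.
    destruct (i =? 1)%nat eqn:Ei; [apply Nat.eqb_eq in Ei; subst|]; ring.
Qed.

(** * The representation of the Fourier coefficients *)

Definition dMf_even g p : nat -> R -> R := fun i u => Mf (dxn (2 * i) g) p u.
Definition dMf_odd g p : nat -> R -> R := fun i u => Mf (dxn (2 * i - 1) g) p u.

Lemma kernel_sum_odd_dx g p (b : coef) N r : r <> 0 -> (forall j, b 0%nat j = 0) ->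
  r * kernel_sum (dMf_odd (dx g) p) 2 b N r = dsum N (fun i j => b i j * kernel_term (dMf_even g p) 1 i j r).
Proof.
  intros Hr Hb. unfold kernel_sum. rewrite <- dsum_mult_l. apply dsum_ext. intros i j _ _.
  destruct i as [|i]; [rewrite Hb; ring|].
  unfold kernel_term, dMf_odd, dMf_even. rewrite (radial_moment_ext _ (fun u => Mf (dxn (2 * S i) g) p u)).
  - field; auto.
  - intros u. rewrite dxn_dx. f_equal. f_equal. lia.
Qed.

Lemma kernel_sum_even_dx g p (a : coef) N r : r <> 0 -> (forall j, a N j = 0) ->
  r * kernel_sum (dMf_even (dx g) p) 1 a N r =
  dsum N (fun i j => shift_row a i j * kernel_term (dMf_odd g p) 2 i j r).
Proof.
  intros Hr Ha. unfold kernel_sum, dsum. rewrite <- sum_n_m_mult_l_R.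
  set (G := fun i => sum_n_m (fun j => shift_row a i j * kernel_term (dMf_odd g p) 2 i j r) 1 N).
  rewrite (sum_n_m_ext_R _ (fun i => G (S i))).
  - rewrite sum_n_m_shift, sum_n_m_last, (sum_n_m_first G 0 N) by lia.
    assert (G0 : G 0%nat = 0) by (apply sum_n_m_eq0; intros; unfold shift_row; simpl; ring).
    assert (GN : G (S N) = 0) by (apply sum_n_m_eq0; intros; unfold shift_row; simpl; rewrite Ha; ring).
    rewrite G0, GN. ring.
  - intros i Hi. unfold G. rewrite <- sum_n_m_mult_l_R. apply sum_n_m_ext_R. intros j Hj.
    unfold shift_row. simpl (S i =? 0)%nat. simpl pred.
    unfold kernel_term, dMf_odd, dMf_even. rewrite (radial_moment_ext _ (fun u => Mf (dxn (2 * S i - 1) g) p u)).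
    + replace (2 * S i)%nat with (S (S (2 * i))) by lia. simpl pow. field. auto.
    + intros u. rewrite dxn_dx. f_equal. f_equal. lia.
Qed.

Lemma kernel_sum_euler_A g p k N s : s <> 0 -> (2 * S k <= N)%nat ->
  s * kernel_sum_deriv (dMf_even g p) 1 (coefA (S k)) N s
    + INR (2 * S k) * kernel_sum (dMf_even g p) 1 (coefA (S k)) N s
  = s * kernel_sum_deriv (dMf_even g p) 1 (coefA k) N s
    - INR (2 * k) * kernel_sum (dMf_even g p) 1 (coefA k) N s
    - 2 * (s * kernel_sum (dMf_odd (dx g) p) 2 (coefB k) N s) - (8 * INR k + 4) * Mf g p s.
Proof.
  intros Hs HN.
  pose proof (kernel_sum_euler (dMf_even g p) 1 (coefA (S k)) N s (INR (2 * S k)) Hs) as Esucc.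
  pose proof (kernel_sum_euler (dMf_even g p) 1 (coefA k) N s (- INR (2 * k)) Hs) as Ek.
  rewrite row_sums_coefA_succ in Esucc by auto. cbv beta in Esucc.
  rewrite kernel_sum_odd_dx by (auto; intros; apply coefB_support; lia).
  assert (Erec :
    dsum N (fun i j => coefA (S k) i j * (2 * INR i - INR 1 - 2 * INR j + 1 + INR (2 * S k))
                       * kernel_term (dMf_even g p) 1 i j s)
    = dsum N (fun i j => coefA k i j * (2 * INR i - INR 1 - 2 * INR j + 1 + - INR (2 * k))
                         * kernel_term (dMf_even g p) 1 i j s)
      + -2 * dsum N (fun i j => coefB k i j * kernel_term (dMf_even g p) 1 i j s)).
  { rewrite <- dsum_mult_l, <- dsum_plus. apply dsum_ext. intros i j _ _.
    rewrite !INR_double, (S_INR k). change (INR 1) with 1.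
    transitivity (coefA (S k) i j * (2 * INR i - 2 * INR j + 2 * INR k + 2)
                  * kernel_term (dMf_even g p) 1 i j s); [ring|].
    rewrite coefA_succ_rel. ring. }
  assert (Emean : s ^ (2 * 0) * dMf_even g p 0%nat s / s ^ 1 * s = Mf g p s)
    by (unfold dMf_even; simpl; field; auto).
  rewrite Emean, Erec in Esucc. lra.
Qed.

Lemma kernel_sum_euler_B g p k N s : s <> 0 -> (2 * S k + 1 <= N)%nat ->
  s * kernel_sum_deriv (dMf_odd g p) 2 (coefB (S k)) N s
    + INR (2 * S k + 1) * kernel_sum (dMf_odd g p) 2 (coefB (S k)) N s
  = s * kernel_sum_deriv (dMf_odd g p) 2 (coefB k) N s
    - INR (2 * k + 1) * kernel_sum (dMf_odd g p) 2 (coefB k) N s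
    + 2 * (s * kernel_sum (dMf_even (dx g) p) 1 (coefA (S k)) N s) + 4 * (s * Mf (dx g) p s).
Proof.
  intros Hs HN.
  pose proof (kernel_sum_euler (dMf_odd g p) 2 (coefB (S k)) N s (INR (2 * S k + 1)) Hs) as Esucc.
  pose proof (kernel_sum_euler (dMf_odd g p) 2 (coefB k) N s (- INR (2 * k + 1)) Hs) as Ek.
  rewrite row_sums_coefB_succ in Esucc by auto. cbv beta in Esucc.
  rewrite kernel_sum_even_dx by (auto; intros; apply coefA_support; lia).
  assert (Erec :
    dsum N (fun i j => coefB (S k) i j * (2 * INR i - INR 2 - 2 * INR j + 1 + INR (2 * S k + 1))
                       * kernel_term (dMf_odd g p) 2 i j s)
    = 2 * dsum N (fun i j => shift_row (coefA (S k)) i j * kernel_term (dMf_odd g p) 2 i j s)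
      + dsum N (fun i j => coefB k i j * (2 * INR i - INR 2 - 2 * INR j + 1 + - INR (2 * k + 1))
                           * kernel_term (dMf_odd g p) 2 i j s)).
  { rewrite <- dsum_mult_l, <- dsum_plus. apply dsum_ext. intros i j _ _.
    rewrite !plus_INR, !INR_double, (S_INR k). change (INR 1) with 1. change (INR 2) with 2.
    transitivity (coefB (S k) i j * (2 * INR i - 2 * INR j + 2 * INR k + 2)
                  * kernel_term (dMf_odd g p) 2 i j s); [ring|].
    rewrite coefB_succ_rel. ring. }
  assert (Emean : s ^ (2 * 1) * dMf_odd g p 1%nat s / s ^ 2 * s = s * Mf (dx g) p s)
    by (unfold dMf_odd; simpl; field; auto).
  rewrite Emean, Erec in Esucc. lra.
Qed.

Lemma is_derive_a_coef_r g n p s : smooth2 g ->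
  is_derive (fun r => a_coef g n p r) s (/ PI * circ_moment_r g p s (cosn n)).
Proof. intros H. apply is_derive_scal, is_derive_circ_moment_r, continuous_R_cosn; auto. Qed.

Lemma is_derive_b_coef_r g n p s : smooth2 g ->
  is_derive (fun r => b_coef g n p r) s (/ PI * circ_moment_r g p s (sinn n)).
Proof. intros H. apply is_derive_scal, is_derive_circ_moment_r, continuous_R_sinn; auto. Qed.

Lemma a_coef_euler_succ g p k s : smooth2 g -> s <> 0 ->
  s * (/ PI * circ_moment_r g p s (cosn (2 * S k))) + INR (2 * S k) * a_coef g (2 * S k) p s
  = s * (/ PI * circ_moment_r g p s (cosn (2 * k))) - INR (2 * k) * a_coef g (2 * k) p s
    - 2 * (s * b_coef (dx g) (2 * k + 1) p s).
Proof.
  intros Hg Hs. rewrite !a_coef_circ_moment, b_coef_circ_moment.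
  replace (2 * S k)%nat with (S (S (2 * k))) by lia. replace (2 * k + 1)%nat with (S (2 * k)) by lia.
  rewrite circ_moment_dx_sinn by auto. field. split; [auto | apply PI_neq0].
Qed.

Lemma b_coef_euler_succ g p k s : smooth2 g -> s <> 0 ->
  s * (/ PI * circ_moment_r g p s (sinn (2 * S k + 1))) + INR (2 * S k + 1) * b_coef g (2 * S k + 1) p s
  = s * (/ PI * circ_moment_r g p s (sinn (2 * k + 1))) - INR (2 * k + 1) * b_coef g (2 * k + 1) p s
    + 2 * (s * a_coef (dx g) (2 * S k) p s).
Proof.
  intros Hg Hs. rewrite !b_coef_circ_moment, a_coef_circ_moment.
  replace (2 * S k + 1)%nat with (S (S (2 * k + 1))) by lia.
  replace (2 * S k)%nat with (S (2 * k + 1)) by lia.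
  rewrite circ_moment_dx_cosn by auto. field. split; [auto | apply PI_neq0].
Qed.

Definition reprA c N k := forall g, smooth_zero_below c g -> forall p r, 0 < r ->
  a_coef g (2 * k) p r = 2 * Mf g p r + kernel_sum (dMf_even g p) 1 (coefA k) N r.

Definition reprB c N k := forall g, smooth_zero_below c g -> forall p r, 0 < r ->
  b_coef g (2 * k + 1) p r = kernel_sum (dMf_odd g p) 2 (coefB k) N r.

Lemma reprA_0 c N : reprA c N 0.
Proof.
  intros g Hg p r Hr. rewrite a_coef_circ_moment, Mf_circ_moment.
  unfold kernel_sum. rewrite dsum_eq0 by (intros; unfold coefA; simpl; ring).
  unfold circ_moment, cosn. rewrite (RInt_ext_R _ (fun t => fcirc g p r t * 1)).
  - pose proof PI_RGT_0. field. lra.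
  - intros t. simpl. rewrite Rmult_0_l, cos_0. ring.
Qed.

Lemma kernel_sum_Mf_dxn_vanish c g p (m : nat -> nat) e a N s : smooth_zero_below c g -> 0 < s < c ->
  kernel_sum (fun i u => Mf (dxn (m i) g) p u) e a N s = 0.
Proof.
  intros Hg Hs. apply (kernel_sum_vanish _ _ _ _ _ c); auto.
  intros i u Hu. apply (Mf_dxn_vanish c); auto.
Qed.

Lemma reprB_0 c N : (1 <= N)%nat -> reprB c N 0.
Proof.
  intros HN g Hg p r Hr. pose proof Hg as [Hs [Hc _]].
  apply (euler_ode_unique (fun r => b_coef g 1 p r) (kernel_sum (dMf_odd g p) 2 (coefB 0) N)
           (fun r => / PI * circ_moment_r g p r (sinn 1)) (kernel_sum_deriv (dMf_odd g p) 2 (coefB 0) N) 1 c);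
    auto.
  - intros s _. apply is_derive_b_coef_r; auto.
  - intros s Hs'. apply is_derive_kernel_sum; [|lra]. intros i; apply (continuous_R_Mf_dxn g Hs).
  - intros s Hs'. rewrite b_coef_circ_moment, (circ_moment_vanish c g p)
      by (exact Hg || (rewrite Rabs_right; lra)).
    rewrite (kernel_sum_Mf_dxn_vanish c g p (fun i => 2 * i - 1)%nat) by auto. ring.
  - intros s Hs'. assert (Hs0 : s <> 0) by lra.
    rewrite kernel_sum_euler, row_sums_coefB_0 by auto. rewrite dsum_eq0.
    + rewrite b_coef_circ_moment.
      assert (E := circ_moment_dx_const g Hs p s Hs0).
      unfold dMf_odd. simpl. rewrite Mf_circ_moment, E. field. split; [lra | apply PI_neq0].
    + intros i j _ _. change (INR 2) with 2. change (INR 1) with 1.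
      transitivity (coefB 0 i j * (2 * INR i - 2 * INR j) * kernel_term (dMf_odd g p) 2 i j s); [ring|].
      rewrite coefB_0_rel. ring.
Qed.

Lemma reprA_succ c N k : (2 * S k + 1 <= N)%nat -> reprA c N k -> reprB c N k -> reprA c N (S k).
Proof.
  intros HN IHa IHb g Hg p r Hr. pose proof Hg as [Hs [Hc _]].
  set (Y := fun k r => 2 * Mf g p r + kernel_sum (dMf_even g p) 1 (coefA k) N r).
  set (dY := fun k r => 2 * (/ (2 * PI) * circ_moment_r g p r (fun _ => 1))
                         + kernel_sum_deriv (dMf_even g p) 1 (coefA k) N r).
  assert (DY : forall k s, 0 < s -> is_derive (Y k) s (dY k s)).
  { intros k' s Hs'. apply is_derive_plus_R.
    - apply is_derive_scal, is_derive_Mf_r; auto.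
    - apply is_derive_kernel_sum; [intros; apply (continuous_R_Mf_dxn g Hs) | lra]. }
  apply (euler_ode_unique (fun r => a_coef g (2 * S k) p r) (Y (S k))
           (fun r => / PI * circ_moment_r g p r (cosn (2 * S k))) (dY (S k)) (2 * S k) c); auto.
  - intros s _. apply is_derive_a_coef_r; auto.
  - intros s Hs'. unfold Y.
    rewrite a_coef_circ_moment, Mf_circ_moment, !(circ_moment_vanish c g p)
      by (exact Hg || (rewrite Rabs_right; lra)).
    rewrite (kernel_sum_Mf_dxn_vanish c g p (fun i => 2 * i)%nat) by auto. ring.
  - intros s Hs'. assert (Hs0 : s <> 0) by lra.
    assert (Hda : / PI * circ_moment_r g p s (cosn (2 * k)) = dY k s).
    { apply (is_derive_unique_pos (fun r => a_coef g (2 * k) p r) (Y k) s); auto.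
      apply is_derive_a_coef_r; auto. }
    rewrite a_coef_euler_succ, Hda, (IHa g Hg), (IHb (dx g) (smooth_zero_below_dx c g Hg)) by auto.
    pose proof (kernel_sum_euler_A g p k N s Hs0 ltac:(lia)) as E.
    unfold Y, dY. rewrite !INR_double, S_INR in *. lra.
Qed.

Lemma reprB_succ c N k : (2 * S k + 1 <= N)%nat -> reprA c N (S k) -> reprB c N k -> reprB c N (S k).
Proof.
  intros HN IHa IHb g Hg p r Hr. pose proof Hg as [Hs [Hc _]].
  set (Z := fun k => kernel_sum (dMf_odd g p) 2 (coefB k) N).
  set (dZ := fun k => kernel_sum_deriv (dMf_odd g p) 2 (coefB k) N).
  assert (DZ : forall k s, 0 < s -> is_derive (Z k) s (dZ k s)).
  { intros k' s Hs'. apply is_derive_kernel_sum; [intros; apply (continuous_R_Mf_dxn g Hs) | lra]. }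
  apply (euler_ode_unique (fun r => b_coef g (2 * S k + 1) p r) (Z (S k))
           (fun r => / PI * circ_moment_r g p r (sinn (2 * S k + 1))) (dZ (S k)) (2 * S k + 1) c); auto.
  - intros s _. apply is_derive_b_coef_r; auto.
  - intros s Hs'. unfold Z.
    rewrite b_coef_circ_moment, (circ_moment_vanish c g p)
      by (exact Hg || (rewrite Rabs_right; lra)).
    rewrite (kernel_sum_Mf_dxn_vanish c g p (fun i => 2 * i - 1)%nat) by auto. ring.
  - intros s Hs'. assert (Hs0 : s <> 0) by lra.
    assert (Hdb : / PI * circ_moment_r g p s (sinn (2 * k + 1)) = dZ k s).
    { apply (is_derive_unique_pos (fun r => b_coef g (2 * k + 1) p r) (Z k) s); auto.
      apply is_derive_b_coef_r; auto. }
    rewrite b_coef_euler_succ, Hdb, (IHb g Hg), (IHa (dx g) (smooth_zero_below_dx c g Hg)) by auto.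
    pose proof (kernel_sum_euler_B g p k N s Hs0 HN) as E.
    unfold Z, dZ. lra.
Qed.

Lemma repr_coef c N k : (2 * k + 1 <= N)%nat -> reprA c N k /\ reprB c N k.
Proof.
  induction k as [|k IH]; intros HN.
  - split; [apply reprA_0 | apply reprB_0; lia].
  - destruct IH as [Ha Hb]; [lia|].
    assert (Ha' : reprA c N (S k)) by (apply reprA_succ; auto; lia).
    split; [exact Ha' | apply reprB_succ; auto].
Qed.

Lemma continuous_R_scaled_pow n r : continuous_R (fun u => (u / r) ^ n).
Proof.
  intros u. apply (continuous_comp (fun u => u / r) (fun t => t ^ n)); [|apply continuous_R_pow].
  apply continuous_mult_R; [apply continuous_id | apply continuous_const_R].
Qed.

Lemma continuous_R_oddpoly_scaled c n r : continuous_R (fun u => oddpoly c n (u / r)).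
Proof.
  apply (continuous_R_sum_n_m (fun j u => c j * (u / r) ^ (2 * j - 1))).
  intros j. apply continuous_R_mult; [apply continuous_R_const | apply continuous_R_scaled_pow].
Qed.

Lemma RInt_oddpoly_sum (h : nat -> R -> R) (c : coef) (w : nat -> R) (L : nat -> nat) m n r :
  (forall i, continuous_R (h i)) ->
  RInt (fun u => sum_n_m (fun i => w i * oddpoly (c i) (L i) (u / r) * h i u) m n) 0 r =
  sum_n_m (fun i => w i * sum_n_m (fun j => c i j * radial_moment (h i) (2 * j - 1) r) 1 (L i)) m n.
Proof.
  intros Hh. rewrite RInt_sum_n_m.
  2: { intros i. apply continuous_R_mult; auto.
       apply continuous_R_mult; [apply continuous_R_const | apply continuous_R_oddpoly_scaled]. }
  apply sum_n_m_ext_R. intros i _.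
  rewrite (RInt_ext_R _ (fun u => sum_n_m (fun j => (w i * c i j) * ((u / r) ^ (2 * j - 1) * h i u)) 1 (L i))).
  - rewrite RInt_sum_n_m, <- sum_n_m_mult_l_R.
    + apply sum_n_m_ext_R. intros j _. rewrite RInt_scal_R; [unfold radial_moment; ring|].
      apply continuous_R_mult; auto using continuous_R_scaled_pow.
    + intros j. apply continuous_R_mult; [apply continuous_R_const|].
      apply continuous_R_mult; auto using continuous_R_scaled_pow.
  - intros u. unfold oddpoly. rewrite Rmult_assoc, <- sum_n_m_mult_r_R, <- sum_n_m_mult_l_R.
    apply sum_n_m_ext_R. intros; ring.
Qed.

Lemma sum_n_m_restrict (f : nat -> R) m K N : (m <= S K)%nat -> (K <= N)%nat ->
  (forall i, (i < m \/ K < i)%nat -> f i = 0) -> (sum_n_m f 0 N : R) = sum_n_m f m K.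
Proof.
  intros HmK HKN Hf.
  rewrite <- (sum_n_m_extend f 0 K N) by (auto; intros; apply Hf; lia).
  destruct m as [|m]; [reflexivity|].
  rewrite (sum_n_m_Chasles (G := R_AbelianMonoid) f 0 m K) by lia.
  rewrite sum_n_m_eq0 by (intros; apply Hf; lia). apply Rplus_0_l.
Qed.

Lemma kernel_sum_restrict h e (a : coef) N m K (L : nat -> nat) r :
  (m <= S K)%nat -> (K <= N)%nat -> (forall i, (m <= i <= K)%nat -> (L i <= N)%nat) ->
  (forall i j, (i < m \/ K < i \/ L i < j)%nat -> a i j = 0) ->
  kernel_sum h e a N r =
  sum_n_m (fun i => r ^ (2 * i) / r ^ e
                    * sum_n_m (fun j => a i j * radial_moment (h i) (2 * j - 1) r) 1 (L i)) m K.
Proof.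
  intros HmK HKN HL Ha. unfold kernel_sum, dsum.
  rewrite (sum_n_m_restrict _ m K N)
    by (auto; intros i Hi; apply sum_n_m_eq0; intros; rewrite Ha by lia; ring).
  apply sum_n_m_ext_R. intros i Hi.
  rewrite <- (sum_n_m_extend _ 1 (L i) N) by (auto; intros; rewrite Ha by lia; ring).
  rewrite <- sum_n_m_mult_l_R. apply sum_n_m_ext_R. intros j _. unfold kernel_term, Rdiv. ring.
Qed.

Lemma powerRZ_double_pred r i : r <> 0 -> powerRZ r (Z.of_nat (2 * i) - 1) = r ^ (2 * i) / r ^ 1.
Proof.
  intros Hr. unfold Z.sub. rewrite powerRZ_add, <- pow_powerRZ by auto.
  simpl. unfold Rdiv. rewrite Rmult_1_r. reflexivity.
Qed.

Lemma pow_double_pred r i : r <> 0 -> (1 <= i)%nat -> r ^ (2 * (i - 1)) = r ^ (2 * i) / r ^ 2.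
Proof.
  intros Hr Hi. replace (2 * i)%nat with (2 * (i - 1) + 2)%nat by lia.
  rewrite pow_add. field. auto.
Qed.

Section Formulas.
Variables (c : R) (f : R -> R -> R).
Hypothesis Hf : smooth_zero_below c f.

Lemma a_coef_formula p r k : 0 < r ->
  a_coef f (2 * k) p r = 2 * Mf f p r +
    RInt (fun u => sum_n_m (fun i => powerRZ r (Z.of_nat (2 * i) - 1) *
                     oddpoly (coefA k i) (k + i) (u / r) * dpMf f (2 * i) p u) 0 k) 0 r.
Proof.
  intros Hr. destruct (repr_coef c (2 * k + 1) k ltac:(lia)) as [HA _].
  rewrite (HA f Hf p r Hr). f_equal.
  rewrite (RInt_ext_R _ (fun u => sum_n_m (fun i => powerRZ r (Z.of_nat (2 * i) - 1) *
             oddpoly (coefA k i) (k + i) (u / r) * dMf_even f p i u) 0 k)).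
  2: { intros u. apply sum_n_m_ext_R. intros i _. rewrite (dpMf_dxn f (proj1 Hf)). reflexivity. }
  rewrite RInt_oddpoly_sum by (intros; apply (continuous_R_Mf_dxn f (proj1 Hf))).
  rewrite (kernel_sum_restrict _ _ _ _ 0 k (fun i => k + i)%nat); try lia.
  - apply sum_n_m_ext_R. intros i _. rewrite powerRZ_double_pred by lra. reflexivity.
  - intros i j H. apply coefA_support. lia.
Qed.

Lemma b_coef_formula p r k : 0 < r -> (1 <= k)%nat ->
  b_coef f (2 * k - 1) p r =
    RInt (fun u => sum_n_m (fun i => r ^ (2 * (i - 1)) *
                     oddpoly (coefB (k - 1) i) (k + i - 1) (u / r) * dpMf f (2 * i - 1) p u) 1 k) 0 r.
Proof.
  intros Hr Hk. destruct (repr_coef c (2 * k + 1) (k - 1) ltac:(lia)) as [_ HB].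
  replace (2 * k - 1)%nat with (2 * (k - 1) + 1)%nat by lia.
  rewrite (HB f Hf p r Hr).
  rewrite (RInt_ext_R _ (fun u => sum_n_m (fun i => r ^ (2 * (i - 1)) *
             oddpoly (coefB (k - 1) i) (k + i - 1) (u / r) * dMf_odd f p i u) 1 k)).
  2: { intros u. apply sum_n_m_ext_R. intros i _. rewrite (dpMf_dxn f (proj1 Hf)). reflexivity. }
  rewrite RInt_oddpoly_sum by (intros; apply (continuous_R_Mf_dxn f (proj1 Hf))).
  rewrite (kernel_sum_restrict _ _ _ _ 1 k (fun i => k + i - 1)%nat); try lia.
  - apply sum_n_m_ext_R. intros i Hi. rewrite pow_double_pred by (lra || lia). reflexivity.
  - intros i j H. apply coefB_support. lia.
Qed.

End Formulas.

Theorem lemma1 (f : R -> R -> R) :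
  smooth2 f -> compact_supp_upper f ->
  exists (cA cB : nat -> nat -> nat -> R),
    forall (p r : R) (k : nat), 0 < r -> (1 <= k)%nat ->
      a_coef f (2 * k) p r =
        2 * Mf f p r +
        RInt (fun u =>
          sum_n_m (fun i =>
            powerRZ r (Z.of_nat (2 * i) - 1) *
            oddpoly (cA k i) (k + i) (u / r) *
            dpMf f (2 * i) p u) 0 k) 0 r
      /\
      b_coef f (2 * k - 1) p r =
        RInt (fun u =>
          sum_n_m (fun i =>
            r ^ (2 * (i - 1)) *
            oddpoly (cB k i) (k + i - 1) (u / r) *
            dpMf f (2 * i - 1) p u) 1 k) 0 r.
Proof.
  intros Hs [a [b [c [d [Hc Hz]]]]].
  assert (Hf : smooth_zero_below c f).
  { split; [exact Hs|]. split; [exact Hc|]. intros x y Hy. apply Hz. lra. }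
  exists coefA, (fun k => coefB (k - 1)).
  intros p r k Hr Hk. split.
  - apply (a_coef_formula c); auto.
  - apply (b_coef_formula c); auto.
Qed.
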